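(* Let $y_1,\dots,y_n\in\mathbb{R}$ and $x_1,\dots,x_n,x_1',\dots,x_n'\in\mathbb{R}^d$. Let $\mathcal{H}$, $\mathcal{F}$, $v_f$, $T$, $T_n$ and empirical nets be as in the context. Let $\tilde{\mathcal{H}}_1$ be an empirical $L^2$ $\epsilon_1$-net for $\mathcal{H}$ of cardinality $M_1$ and $\tilde{\mathcal{H}}_2$ an empirical $L^2$ $\epsilon_2$-net for $\mathcal{H}$ of cardinality $M_2$. Let $f=\sum_h\beta_hh\in\mathcal{F}$, let $m_0\ge1$ be an integer and $v\ge v_f$. (i) There exist $m\le m_0+M_1$ and $\tilde h_1,\dots,\tilde h_m\in\tilde{\mathcal{H}}_2$ such that $\tilde f_m=\frac{v}{m_0}\sum_{k=1}^m\tilde h_k$ satisfies $$\frac1n\sum_{i=1}^n(y_i-T\tilde f_m(x_i))^2-\frac1n\sum_{i=1}^n(y_i-f(x_i))^2+\frac1n\sum_{i=1}^n\big(T\tilde f_m(x_i')-Tf(x_i')\big)^2\le\frac{2v^2\epsilon_1^2(1+M_1/m_0)}{m_0}+\frac{v^2M_1}{2m_0^2}+8B_nv(1+M_1/m_0)\epsilon_2+\frac{T_n}{n}.$$ The collection of all functions of this form $\frac{v}{m_0}\sum_{k=1}^m\tilde h_k$ ($m\le m_0+M_1$, $\tilde h_k\in\tilde{\mathcal{H}}_2$) has cardinality at most $\binom{M_2+M_1+m_0}{M_1+m_0}$. (ii) There exist $\tilde h_1,\dots,\tilde h_{m_0}\in\tilde{\mathcal{H}}_2$ such that $\tilde f_{m_0}=\frac{v}{m_0}\sum_{k=1}^{m_0}\tilde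 h_k$ satisfies $$\frac1n\sum_{i=1}^n(y_i-T\tilde f_{m_0}(x_i))^2-\frac1n\sum_{i=1}^n(y_i-f(x_i))^2+\frac1n\sum_{i=1}^n\big(T\tilde f_{m_0}(x_i')-Tf(x_i')\big)^2\le\frac{2vv_f}{m_0}+8B_nv\epsilon_2+\frac{T_n}{n}$$ and there exist $\tilde h_1,\dots,\tilde h_{m_0}\in\tilde{\mathcal{H}}_2$ such that $\tilde f_{m_0}=\frac{v}{m_0}\sum_{k=1}^{m_0}\tilde h_k$ satisfies $$\frac1n\sum_{i=1}^n(\tilde f_{m_0}(x_i)-f(x_i))^2+\frac1n\sum_{i=1}^n(\tilde f_{m_0}(x_i')-f(x_i'))^2\le\frac{4vv_f}{m_0}+4v^2\epsilon_2^2.$$ The collection of all functions $\frac{v}{m_0}\sum_{k=1}^{m_0}\tilde h_k$ with $\tilde h_k\in\tilde{\mathcal{H}}_2$ has cardinality at most $\binom{M_2+m_0}{m_0}$.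
   Context: $\phi:\mathbb{R}\to\mathbb{R}$ satisfies $|\phi|\le1$ and is Lipschitz with constant at most $1$; $\mathcal{H}$ is a collection of functions on $\mathbb{R}^d$ of the form $x\mapsto\pm\phi(\theta\cdot x)$ with $\|\theta\|_1\le\Lambda$, closed under negation and containing the zero function. $\mathcal{F}$ is the set of finite combinations $f=\sum_{h\in\mathcal{H}}\beta_hh$ with $\beta_h\ge0$, and $v_f=\inf\{\sum_h\beta_h: f=\sum_h\beta_hh,\ \beta_h\ge0\}$. For $B_n>0$, $Tf=\min\{|f|,B_n\}\,\mathrm{sgn}f$ and $T_n=2\sum_{i=1}^n(y_i^2-B_n^2)\mathbb{I}\{|y_i|>B_n\}$. An empirical $L^2$ $\epsilon$-net for $\mathcal{H}$ is a finite set $\tilde{\mathcal{H}}\subset\mathcal{H}$ such that for every $h\in\mathcal{H}$ there is $\tilde h\in\tilde{\mathcal{H}}$ with $\frac1{2n}\sum_{i=1}^n|h(x_i)-\tilde h(x_i)|^2+\frac1{2n}\sum_{i=1}^n|h(x_i')-\tilde h(x_i')|^2\le\epsilon^2$. *)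

From Stdlib Require Import Reals Lra List.
Import ListNotations.
Open Scope R_scope.

(* Points of R^d are represented as sequences nat -> R; only coordinates
   0..d-1 are ever used (dot product and l1-norm are over j < d). *)
Definition vec := nat -> R.

Fixpoint sumR (n : nat) (g : nat -> R) : R :=
  match n with
  | O => 0
  | S k => sumR k g + g k
  end.

Definition dot (d : nat) (theta x : vec) : R := sumR d (fun j => theta j * x j).
Definition l1norm (d : nat) (theta : vec) : R := sumR d (fun j => Rabs (theta j)).

Definition phi_ok (phi : R -> R) : Prop :=
  (forall t, Rabs (phi t) <= 1) /\ (forall s t, Rabs (phi s - phi t) <= Rabs (s - t)).

Definition H_ok (d : nat) (phi : R -> R) (Lambda : R) (H : (vec -> R) -> Prop) : Prop :=
  (forall h, H h ->
     h = (fun _ => 0) \/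
     exists (s : R) (theta : vec),
       (s = 1 \/ s = -1) /\ l1norm d theta <= Lambda /\
       h = (fun x => s * phi (dot d theta x))) /\
  (forall h, H h -> H (fun x => - h x)) /\
  H (fun _ => 0).

(* A finite nonnegative combination sum_h beta_h h, as a list of pairs (beta_h, h). *)
Definition comb_ok (H : (vec -> R) -> Prop) (L : list (R * (vec -> R))) : Prop :=
  forall p, In p L -> 0 <= fst p /\ H (snd p).

Definition comb_fun (L : list (R * (vec -> R))) : vec -> R :=
  fun x => fold_right (fun p acc => fst p * snd p x + acc) 0 L.

Definition comb_weight (L : list (R * (vec -> R))) : R :=
  fold_right (fun p acc => fst p + acc) 0 L.

(* v_f = inf { sum beta_h : f = sum beta_h h, beta_h >= 0 } *)
Definition is_glb (S : R -> Prop) (m : R) : Prop :=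
  (forall s, S s -> m <= s) /\ (forall m', (forall s, S s -> m' <= s) -> m' <= m).

Definition vf_set (H : (vec -> R) -> Prop) (f : vec -> R) (w : R) : Prop :=
  exists L, comb_ok H L /\ (forall x, comb_fun L x = f x) /\ comb_weight L = w.

Definition sgn (t : R) : R :=
  if Rlt_dec 0 t then 1 else if Rlt_dec t 0 then -1 else 0.

Definition trunc (B : R) (g : vec -> R) : vec -> R :=
  fun x => Rmin (Rabs (g x)) B * sgn (g x).

Definition Tn (n : nat) (B : R) (y : nat -> R) : R :=
  2 * sumR n (fun i => (y i ^ 2 - B ^ 2) * (if Rlt_dec B (Rabs (y i)) then 1 else 0)).

Definition emp_net (H : (vec -> R) -> Prop) (n : nat) (x x' : nat -> vec)
  (eps : R) (M : nat) (Ht : list (vec -> R)) : Prop :=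
  NoDup Ht /\ length Ht = M /\ (forall h, In h Ht -> H h) /\
  forall h, H h -> exists ht, In ht Ht /\
    / (2 * INR n) * sumR n (fun i => Rabs (h (x i) - ht (x i)) ^ 2)
    + / (2 * INR n) * sumR n (fun i => Rabs (h (x' i) - ht (x' i)) ^ 2) <= eps ^ 2.

Definition ftilde (v : R) (m0 : nat) (hs : list (vec -> R)) : vec -> R :=
  fun x => v / INR m0 * fold_right (fun h acc => h x + acc) 0 hs.

Definition excess (n : nat) (B : R) (y : nat -> R) (x x' : nat -> vec)
  (g f : vec -> R) : R :=
  / INR n * sumR n (fun i => (y i - trunc B g (x i)) ^ 2)
  - / INR n * sumR n (fun i => (y i - f (x i)) ^ 2)
  + / INR n * sumR n (fun i => (trunc B g (x' i) - trunc B f (x' i)) ^ 2).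

Definition emp_dist2 (n : nat) (x x' : nat -> vec) (g f : vec -> R) : R :=
  / INR n * sumR n (fun i => (g (x i) - f (x i)) ^ 2)
  + / INR n * sumR n (fun i => (g (x' i) - f (x' i)) ^ 2).

From Stdlib Require Import Reals Lra Lia List Permutation ZArith.
From Stdlib Require Import Classical ClassicalEpsilon FunctionalExtensionality.
Import ListNotations.
Open Scope R_scope.

(* Maurey's empirical method, derandomised.  With [c_i = f(x_i) - y_i], the excess risk of [g] is
   bounded by the empirical quadratic functional [psi_c (g - f)] plus truncation terms.  Since
   [psi_c] is quadratic, a centred random step raises its expectation by exactly the variance of
   the step, so some outcome of every finite lottery does at least that well.
   For (ii), [m0] draws of [(v/m0) h], with [h] chosen with probability [beta_h / v] (and [0]
   otherwise), have total variance at most [2 v v_f / m0].  For (i), the atoms of [f] are grouped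
   by their [eps1]-net neighbour; randomised rounding of [m0 * mass_j / v] fixes how many draws
   group [j] receives (at most [m0 + M1] in all), and draws within a group differ by [O(eps1)].
   Each drawn atom is then replaced by its [eps2]-net neighbour, which moves the truncated
   predictions by [O(B v eps2)].  As [v_f] is only an infimum, the argument runs with a
   representation of weight [v_f + eta]; the candidates are finitely many multisets of net
   points, so the bound survives [eta -> 0], and counting those multisets gives the cardinality
   bounds. *)

(** * Finite sums and lists *)

Definition lsum {T} (l : list T) (F : T -> R) : R := fold_right (fun t acc => F t + acc) 0 l.

Lemma lsum_nil {T} (F : T -> R) : lsum [] F = 0.
Proof. reflexivity. Qed.

Lemma lsum_cons {T} (a : T) l F : lsum (a :: l) F = F a + lsum l F.
Proof. reflexivity. Qed.

Lemma lsum_app {T} (l1 l2 : list T) F : lsum (l1 ++ l2) F = lsum l1 F + lsum l2 F.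
Proof. induction l1; [unfold lsum; cbn; lra|]. rewrite <- app_comm_cons, !lsum_cons, IHl1. lra. Qed.

Lemma lsum_map {T U} (g : T -> U) l F : lsum (map g l) F = lsum l (fun t => F (g t)).
Proof. induction l; [reflexivity|]. cbn [map]. rewrite !lsum_cons, IHl. reflexivity. Qed.

Lemma lsum_ext {T} (l : list T) F G : (forall t, In t l -> F t = G t) -> lsum l F = lsum l G.
Proof.
  induction l as [|a l IH]; intros E; [reflexivity|]. rewrite !lsum_cons, E, IH; auto.
  - intros; apply E; right; auto.
  - left; auto.
Qed.

Lemma lsum_le {T} (l : list T) F G : (forall t, In t l -> F t <= G t) -> lsum l F <= lsum l G.
Proof.
  induction l as [|a l IH]; intros E; [unfold lsum; cbn; lra|]. rewrite !lsum_cons.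
  assert (lsum l F <= lsum l G) by (apply IH; intros; apply E; right; auto).
  specialize (E a (in_eq _ _)). lra.
Qed.

Lemma lsum_plus {T} (l : list T) F G : lsum l (fun t => F t + G t) = lsum l F + lsum l G.
Proof. induction l; [unfold lsum; cbn; lra|]. rewrite !lsum_cons, IHl. lra. Qed.

Lemma lsum_scal {T} (l : list T) c F : lsum l (fun t => c * F t) = c * lsum l F.
Proof. induction l; [unfold lsum; cbn; lra|]. rewrite !lsum_cons, IHl. lra. Qed.

Lemma lsum_nonneg {T} (l : list T) F : (forall t, In t l -> 0 <= F t) -> 0 <= lsum l F.
Proof.
  induction l as [|a l IH]; intros E; [unfold lsum; cbn; lra|]. rewrite lsum_cons.
  pose proof (E a (in_eq _ _)). pose proof (IH (fun t h => E t (in_cons _ _ _ h))). lra.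
Qed.

Lemma lsum_pos {T} (l : list T) F t0 :
  (forall t, In t l -> 0 <= F t) -> In t0 l -> 0 < F t0 -> 0 < lsum l F.
Proof.
  induction l as [|a l IH]; intros E Hin Hpos; [destruct Hin|].
  rewrite lsum_cons. destruct Hin as [<-|Hin].
  - pose proof (lsum_nonneg l F (fun t h => E t (in_cons _ _ _ h))). lra.
  - pose proof (E a (in_eq _ _)). pose proof (IH (fun t h => E t (in_cons _ _ _ h)) Hin Hpos). lra.
Qed.

Lemma lsum_pos_witness {T} (l : list T) F : 0 < lsum l F -> exists t, In t l /\ 0 < F t.
Proof.
  induction l as [|a l IH]; intros Hpos; [rewrite lsum_nil in Hpos; lra|].
  rewrite lsum_cons in Hpos. destruct (Rlt_le_dec 0 (F a)) as [Ha|Ha].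
  - exists a; split; [left|]; auto.
  - destruct IH as [t [Ht Hft]]; [lra|]. exists t; split; [right|]; auto.
Qed.

Lemma lsum_repeat {T} (a : T) k F : lsum (repeat a k) F = INR k * F a.
Proof. induction k; [unfold lsum; cbn; lra|]. cbn [repeat]. rewrite lsum_cons, IHk, S_INR. lra. Qed.

Lemma lsum_concat {T} (ls : list (list T)) F : lsum (concat ls) F = lsum ls (fun l => lsum l F).
Proof. induction ls; [reflexivity|]. cbn [concat]. rewrite lsum_app, lsum_cons, IHls. reflexivity. Qed.

Lemma lsum_perm {T} (l1 l2 : list T) F : Permutation l1 l2 -> lsum l1 F = lsum l2 F.
Proof. induction 1; rewrite ?lsum_cons; try lra. Qed.

Lemma INR_length_lsum {T} (l : list T) : INR (length l) = lsum l (fun _ => 1).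
Proof. induction l; [reflexivity|]. cbn [length]. rewrite S_INR, lsum_cons, IHl. ring. Qed.

Lemma sumR_ext n f g : (forall i, (i < n)%nat -> f i = g i) -> sumR n f = sumR n g.
Proof. induction n; cbn; intros E; auto. rewrite IHn, E; auto. Qed.

Lemma sumR_le n f g : (forall i, (i < n)%nat -> f i <= g i) -> sumR n f <= sumR n g.
Proof. induction n; cbn; intros E; [lra|].
  assert (sumR n f <= sumR n g) by (apply IHn; auto). specialize (E n (Nat.lt_succ_diag_r n)). lra. Qed.

Lemma sumR_plus n f g : sumR n (fun i => f i + g i) = sumR n f + sumR n g.
Proof. induction n; cbn; [lra|]. rewrite IHn; lra. Qed.

Lemma sumR_scal n c f : sumR n (fun i => c * f i) = c * sumR n f.
Proof. induction n; cbn; [lra|]. rewrite IHn; lra. Qed.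

Lemma sumR_opp n f : sumR n (fun i => - f i) = - sumR n f.
Proof. induction n; cbn; [lra|]. rewrite IHn; lra. Qed.

Lemma sumR_const n c : sumR n (fun _ => c) = INR n * c.
Proof. induction n; cbn [sumR]; [simpl; lra|]. rewrite IHn, S_INR; lra. Qed.

Lemma sumR_nonneg n f : (forall i, (i < n)%nat -> 0 <= f i) -> 0 <= sumR n f.
Proof. intros E. rewrite <- (Rmult_0_r (INR n)), <- sumR_const. apply sumR_le; auto. Qed.

Lemma sumR_indicator k M c : (k < M)%nat -> sumR M (fun j => if Nat.eqb k j then c else 0) = c.
Proof.
  induction M; intros Hk; [lia|]. cbn [sumR]. destruct (Nat.eqb_spec k M) as [->|Hne].
  - rewrite (sumR_ext _ _ (fun _ => 0)), sumR_const; [ring|].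
    intros i Hi. destruct (Nat.eqb_spec M i); [lia|auto].
  - rewrite IHM by lia. ring.
Qed.

Lemma lsum_sumR {T} (l : list T) n (G : T -> nat -> R) :
  lsum l (fun t => sumR n (G t)) = sumR n (fun i => lsum l (fun t => G t i)).
Proof.
  induction l; [cbn; rewrite sumR_const; lra|].
  rewrite lsum_cons, IHl, <- sumR_plus. reflexivity.
Qed.

Lemma lsum_seq M F : lsum (seq 0 M) F = sumR M F.
Proof. induction M; [reflexivity|]. rewrite seq_S, lsum_app, IHM. cbn. lra. Qed.

Lemma lsum_nth {T} (l : list T) d F : lsum l F = sumR (length l) (fun j => F (nth j l d)).
Proof.
  assert (shift : forall k (G : nat -> R), sumR (S k) G = G 0%nat + sumR k (fun j => G (S j))).
  { induction k; intros; cbn in *; [lra|]. rewrite IHk. cbn. lra. }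
  induction l; [reflexivity|]. cbn [length]. rewrite lsum_cons, IHl, shift. reflexivity.
Qed.

Lemma lsum_partition {T} (l : list T) (key : T -> nat) M F : (forall t, In t l -> (key t < M)%nat) ->
  sumR M (fun j => lsum (filter (fun t => Nat.eqb (key t) j) l) F) = lsum l F.
Proof.
  induction l as [|a l IH]; intros Hl.
  - rewrite (sumR_ext _ _ (fun _ => 0)), sumR_const by reflexivity. rewrite lsum_nil; ring.
  - rewrite lsum_cons, <- IH by (intros; apply Hl; right; auto).
    rewrite (sumR_ext _ _ (fun j => (if Nat.eqb (key a) j then F a else 0)
                                   + lsum (filter (fun t => Nat.eqb (key t) j) l) F)).
    + rewrite sumR_plus, sumR_indicator; auto. apply Hl; left; auto.
    + intros i _. cbn [filter]. destruct (Nat.eqb (key a) i); [rewrite lsum_cons|]; ring.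
Qed.

Lemma lsum_concat_repeat {T} M (g : nat -> T) (m : nat -> nat) (F : T -> R) :
  lsum (concat (map (fun j => repeat (g j) (m j)) (seq 0 M))) F = sumR M (fun j => INR (m j) * F (g j)).
Proof. rewrite lsum_concat, lsum_map, lsum_seq. apply sumR_ext. intros. apply lsum_repeat. Qed.

Lemma Forall2_repeat {T U} (P : T -> U -> Prop) l u k : Forall2 P l (repeat u k) ->
  length l = k /\ forall t, In t l -> P t u.
Proof.
  revert l; induction k as [|k IH]; intros l Hl; inversion Hl as [|t0 ? l' ? Ht0 Hl']; subst;
    [split; auto; intros _ []|].
  destruct (IH _ Hl') as [Hlen Hall]. split; [cbn; auto|]. intros t [<-|Ht]; auto.
Qed.

Lemma Forall2_in_l {T U} (P : T -> U -> Prop) l1 l2 t : Forall2 P l1 l2 -> In t l1 ->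
  exists u, In u l2 /\ P t u.
Proof.
  induction 1 as [|a b l1 l2 Hab _ IH]; intros Ht; [destruct Ht|].
  destruct Ht as [<-|Ht]; [exists b; split; [left|]; auto|].
  destruct (IH Ht) as [u [Hu Htu]]. exists u; split; [right|]; auto.
Qed.

Lemma Forall2_nth {T U} (P : T -> U -> Prop) l1 l2 d1 d2 : Forall2 P l1 l2 ->
  forall i, (i < length l2)%nat -> P (nth i l1 d1) (nth i l2 d2).
Proof. induction 1; cbn; intros i Hi; [lia|]. destruct i; auto. apply IHForall2; lia. Qed.

(** * Empirical quadratic forms *)

Section Empirical.
Variable n : nat.
Variables x x' : nat -> vec.

Definition emp_sq (u : vec -> R) := / INR n * sumR n (fun i => u (x i) ^ 2 + u (x' i) ^ 2).
Definition emp_l1 (u : vec -> R) := / INR n * sumR n (fun i => Rabs (u (x i)) + Rabs (u (x' i))).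
Definition emp_lin (a b : nat -> R) (u : vec -> R) :=
  / INR n * sumR n (fun i => a i * u (x i) + b i * u (x' i)).
(* For [c i = f (x i) - y i] and [u = g - f], [psi c u] is the excess risk of [g] before truncation. *)
Definition psi (c : nat -> R) (u : vec -> R) :=
  / INR n * sumR n (fun i => u (x i) ^ 2 + u (x' i) ^ 2 + 2 * u (x i) * c i).

Lemma emp_sq_ext u w : (forall z, u z = w z) -> emp_sq u = emp_sq w.
Proof. intros E. unfold emp_sq. f_equal. apply sumR_ext; intros; rewrite !E; auto. Qed.

Lemma psi_ext c u w : (forall z, u z = w z) -> psi c u = psi c w.
Proof. intros E. unfold psi. f_equal. apply sumR_ext; intros; rewrite !E; auto. Qed.

Lemma emp_l1_ext u w : (forall z, u z = w z) -> emp_l1 u = emp_l1 w.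
Proof. intros E. unfold emp_l1. f_equal. apply sumR_ext; intros; rewrite !E; auto. Qed.

Lemma psi_add c h u : psi c (fun z => h z + u z) =
  psi c h + emp_lin (fun i => 2 * h (x i) + 2 * c i) (fun i => 2 * h (x' i)) u + emp_sq u.
Proof. unfold psi, emp_lin, emp_sq. rewrite <- !Rmult_plus_distr_l, <- !sumR_plus.
  f_equal. apply sumR_ext; intros; ring. Qed.

Lemma emp_sq_add u w : emp_sq (fun z => u z + w z) =
  emp_sq u + emp_lin (fun i => 2 * w (x i)) (fun i => 2 * w (x' i)) u + emp_sq w.
Proof. unfold emp_lin, emp_sq. rewrite <- !Rmult_plus_distr_l, <- !sumR_plus.
  f_equal. apply sumR_ext; intros; ring. Qed.

Lemma emp_sq_scal s u : emp_sq (fun z => s * u z) = s ^ 2 * emp_sq u.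
Proof. unfold emp_sq.
  rewrite (sumR_ext _ _ (fun i => s ^ 2 * (u (x i) ^ 2 + u (x' i) ^ 2))), sumR_scal by (intros; ring).
  ring. Qed.

Lemma psi_eq c u : psi c u = emp_sq u + / INR n * sumR n (fun i => 2 * u (x i) * c i).
Proof. unfold psi, emp_sq. rewrite <- Rmult_plus_distr_l, <- sumR_plus. reflexivity. Qed.

Lemma psi_scal c s u : psi c (fun z => s * u z) = s ^ 2 * emp_sq u + s * (psi c u - emp_sq u).
Proof.
  rewrite !psi_eq, emp_sq_scal.
  rewrite (sumR_ext _ _ (fun i => s * (2 * u (x i) * c i))), sumR_scal by (intros; ring). ring.
Qed.

Lemma psi_zero u : psi (fun _ => 0) u = emp_sq u.
Proof. unfold psi, emp_sq. f_equal. apply sumR_ext; intros; ring. Qed.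

Lemma emp_dist2_emp_sq g f : emp_dist2 n x x' g f = emp_sq (fun z => g z - f z).
Proof. unfold emp_dist2, emp_sq. rewrite <- Rmult_plus_distr_l, <- sumR_plus. reflexivity. Qed.

Lemma emp_sq_nonneg u : 0 <= emp_sq u.
Proof.
  unfold emp_sq. destruct n as [|k]; [cbn; lra|].
  apply Rmult_le_pos; [left; apply Rinv_0_lt_compat, lt_0_INR; lia|].
  apply sumR_nonneg; intros; nra.
Qed.

Hypothesis n_pos : (0 < n)%nat.

Let inv_n_pos : 0 < / INR n.
Proof. apply Rinv_0_lt_compat, lt_0_INR; auto. Qed.

Lemma emp_sq_le2 u : (forall z, Rabs (u z) <= 1) -> emp_sq u <= 2.
Proof.
  intros Hb. unfold emp_sq.
  apply Rle_trans with (/ INR n * sumR n (fun _ => 2)).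
  - apply Rmult_le_compat_l; [lra|]. apply sumR_le; intros i _.
    rewrite <- (pow2_abs (u (x i))), <- (pow2_abs (u (x' i))).
    pose proof (Hb (x i)). pose proof (Hb (x' i)).
    pose proof (Rabs_pos (u (x i))). pose proof (Rabs_pos (u (x' i))). nra.
  - rewrite sumR_const. right; field. apply not_0_INR; lia.
Qed.

Lemma emp_sq_add_le u w k : 0 < k ->
  emp_sq (fun z => u z + w z) <= (1 + k) * emp_sq u + (1 + / k) * emp_sq w.
Proof.
  intros Hk. unfold emp_sq.
  set (Su := sumR n (fun i => u (x i) ^ 2 + u (x' i) ^ 2)).
  set (Sw := sumR n (fun i => w (x i) ^ 2 + w (x' i) ^ 2)).
  replace ((1 + k) * (/ INR n * Su) + (1 + / k) * (/ INR n * Sw))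
    with (/ INR n * ((1 + k) * Su + (1 + / k) * Sw)) by ring.
  unfold Su, Sw. rewrite <- (sumR_scal n (1 + k)), <- (sumR_scal n (1 + / k)), <- sumR_plus.
  apply Rmult_le_compat_l; [lra|].
  apply sumR_le; intros i _.
  assert (young : forall a b, (a + b) ^ 2 <= (1 + k) * a ^ 2 + (1 + / k) * b ^ 2).
  { intros a b.
    assert (0 <= (k * a - b) ^ 2 / k) by (apply Rle_mult_inv_pos; [apply pow2_ge_0|auto]).
    replace ((1 + k) * a ^ 2 + (1 + / k) * b ^ 2) with ((a + b) ^ 2 + (k * a - b) ^ 2 / k) by (field; lra).
    lra. }
  pose proof (young (u (x i)) (w (x i))). pose proof (young (u (x' i)) (w (x' i))). lra.
Qed.

Lemma emp_l1_add_le u w : emp_l1 (fun z => u z + w z) <= emp_l1 u + emp_l1 w.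
Proof.
  unfold emp_l1. rewrite <- Rmult_plus_distr_l, <- sumR_plus.
  apply Rmult_le_compat_l; [lra|]. apply sumR_le; intros i _.
  pose proof (Rabs_triang (u (x i)) (w (x i))). pose proof (Rabs_triang (u (x' i)) (w (x' i))). lra.
Qed.

Lemma emp_l1_scal s u : emp_l1 (fun z => s * u z) = Rabs s * emp_l1 u.
Proof. unfold emp_l1.
  rewrite (sumR_ext _ _ (fun i => Rabs s * (Rabs (u (x i)) + Rabs (u (x' i))))), sumR_scal
    by (intros; rewrite !Rabs_mult; ring).
  ring. Qed.

(* Pointwise AM-GM: [|a| <= a^2 / (2t) + t / 2]. *)
Lemma emp_l1_le_amgm u t : 0 < t -> emp_l1 u <= emp_sq u / (2 * t) + t.
Proof.
  intros Ht. unfold emp_l1, emp_sq.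
  assert (amgm : forall a, Rabs a <= a ^ 2 / (2 * t) + t / 2).
  { intros a. rewrite <- (pow2_abs a). pose proof (Rabs_pos a).
    assert (0 <= (Rabs a - t) ^ 2) by apply pow2_ge_0.
    apply Rmult_le_reg_r with (2 * t); [lra|]. field_simplify; [|lra]. nra. }
  apply Rle_trans with (/ INR n * sumR n (fun i => / (2 * t) * (u (x i) ^ 2 + u (x' i) ^ 2) + t)).
  - apply Rmult_le_compat_l; [lra|]. apply sumR_le; intros i _.
    pose proof (amgm (u (x i))). pose proof (amgm (u (x' i))).
    apply Rle_trans with (u (x i) ^ 2 / (2 * t) + t / 2 + (u (x' i) ^ 2 / (2 * t) + t / 2)); [lra|].
    right; field; lra.
  - assert (INR n <> 0) by (apply not_0_INR; lia).
    rewrite sumR_plus, sumR_scal, sumR_const. right; field; split; auto; lra.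
Qed.

Lemma le_of_forall_amgm X e : 0 <= e -> (forall t, 0 < t -> X <= e ^ 2 / t + t) -> X <= 2 * e.
Proof.
  intros [He|<-] Hall.
  - specialize (Hall e He). replace (e ^ 2 / e + e) with (2 * e) in Hall by (field; lra). auto.
  - destruct (Rle_dec X 0); [lra|]. specialize (Hall (X / 2) ltac:(lra)).
    replace (0 ^ 2 / (X / 2) + X / 2) with (X / 2) in Hall by (field; lra). lra.
Qed.

Lemma emp_l1_le_of_emp_sq u e : 0 <= e -> emp_sq u <= 2 * e ^ 2 -> emp_l1 u <= 2 * e.
Proof.
  intros He Hq. apply le_of_forall_amgm; auto. intros t Ht.
  apply Rle_trans with (emp_sq u / (2 * t) + t); [apply emp_l1_le_amgm; auto|].
  apply Rplus_le_compat_r.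
  unfold Rdiv. replace (e ^ 2 * / t) with (2 * e ^ 2 * / (2 * t)) by (field; lra).
  apply Rmult_le_compat_r; [left; apply Rinv_0_lt_compat; lra|auto].
Qed.

End Empirical.

(** * Lotteries *)

(* [label] records what the outcome stands for: the drawn atom, or the rounded count. *)
Record outcome (A : Type) := Outcome { prob : R; draw : vec -> R; label : A }.
Arguments Outcome {A}. Arguments prob {A}. Arguments draw {A}. Arguments label {A}.

Definition is_lottery {A} (l : list (outcome A)) :=
  lsum l prob = 1 /\ forall o, In o l -> 0 <= prob o.

Definition mean {A} (l : list (outcome A)) (z : vec) := lsum l (fun o => prob o * draw o z).

Lemma lottery_centered {A} (l : list (outcome A)) z : is_lottery l ->
  lsum l (fun o => prob o * (draw o z - mean l z)) = 0.
Proof.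
  intros [Hsum _].
  rewrite (lsum_ext _ _ (fun o => prob o * draw o z + (- mean l z) * prob o)) by (intros; ring).
  rewrite lsum_plus, lsum_scal, Hsum. unfold mean. ring.
Qed.

Lemma lottery_witness {A} (l : list (outcome A)) (F : outcome A -> R) : is_lottery l ->
  exists o, In o l /\ 0 < prob o /\ F o <= lsum l (fun o => prob o * F o).
Proof.
  intros [Hsum Hnn]. set (m := lsum l (fun o => prob o * F o)).
  apply NNPP; intros Hno.
  assert (Hgt : forall o, In o l -> 0 < prob o -> m < F o).
  { intros o Ho Hp. apply Rnot_le_lt. intros Hle. apply Hno. exists o; auto. }
  destruct (lsum_pos_witness l prob ltac:(lra)) as [o0 [Ho0 Hp0]].
  assert (Hpos : 0 < lsum l (fun o => prob o * (F o - m))).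
  { apply (lsum_pos _ _ o0); auto.
    - intros o Ho. destruct (Hnn o Ho) as [Hp|Hp]; [pose proof (Hgt o Ho Hp); nra|rewrite <- Hp; lra].
    - pose proof (Hgt o0 Ho0 Hp0). nra. }
  rewrite (lsum_ext _ _ (fun o => prob o * F o + (- m) * prob o)), lsum_plus, lsum_scal, Hsum in Hpos
    by (intros; ring).
  fold m in Hpos. lra.
Qed.

Section Variance.
Variable n : nat.
Variables x x' : nat -> vec.

Definition variance {A} (l : list (outcome A)) :=
  lsum l (fun o => prob o * emp_sq n x x' (fun z => draw o z - mean l z)).

Lemma lottery_lin_centered {A} (l : list (outcome A)) a b : is_lottery l ->
  lsum l (fun o => prob o * emp_lin n x x' a b (fun z => draw o z - mean l z)) = 0.
Proof.
  intros Hl. unfold emp_lin.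
  rewrite (lsum_ext _ _ (fun o => / INR n * sumR n (fun i =>
      a i * (prob o * (draw o (x i) - mean l (x i))) + b i * (prob o * (draw o (x' i) - mean l (x' i))))))
    by (intros; rewrite Rmult_comm, Rmult_assoc, (Rmult_comm (sumR _ _)), <- sumR_scal;
        f_equal; apply sumR_ext; intros; ring).
  rewrite lsum_scal, lsum_sumR.
  rewrite (sumR_ext _ _ (fun _ => 0)), sumR_const; [ring|].
  intros i _. rewrite lsum_plus, !lsum_scal, !lottery_centered by auto. ring.
Qed.

(* The expected value of [psi] after a random step is [psi] plus the variance, because
   [psi] is quadratic and the step is centred; some outcome does no worse than the expectation. *)
Lemma psi_lottery_step {A} c h (l : list (outcome A)) : is_lottery l ->
  exists o, In o l /\ 0 < prob o /\
  psi n x x' c (fun z => h z + (draw o z - mean l z)) <= psi n x x' c h + variance l.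
Proof.
  intros Hl.
  destruct (lottery_witness l (fun o => psi n x x' c (fun z => h z + (draw o z - mean l z))) Hl)
    as [o [Ho [Hp Hle]]].
  exists o; split; [|split]; auto. eapply Rle_trans; [apply Hle|].
  rewrite (lsum_ext _ _ (fun o => psi n x x' c h * prob o
      + prob o * emp_lin n x x' (fun i => 2 * h (x i) + 2 * c i) (fun i => 2 * h (x' i))
                   (fun z => draw o z - mean l z)
      + prob o * emp_sq n x x' (fun z => draw o z - mean l z)))
    by (intros; rewrite psi_add; ring).
  rewrite !lsum_plus, lsum_scal, lottery_lin_centered by auto.
  destruct Hl as [Hsum _]. rewrite Hsum. unfold variance. lra.
Qed.

Lemma psi_lotteries {A} c (ls : list (list (outcome A))) : (forall l, In l ls -> is_lottery l) ->
  forall h, exists ch, Forall2 (fun o l => In o l /\ 0 < prob o) ch ls /\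
  psi n x x' c (fun z => h z + lsum ch (fun o => draw o z) - lsum ls (fun l => mean l z))
  <= psi n x x' c h + lsum ls variance.
Proof.
  induction ls as [|l ls IH]; intros Hls h.
  - exists []. split; [constructor|]. rewrite lsum_nil.
    rewrite (psi_ext _ _ _ _ _ h) by (intros; rewrite !lsum_nil; ring). lra.
  - destruct (psi_lottery_step c h l (Hls l (in_eq _ _))) as [o [Ho [Hp Hle]]].
    destruct (IH (fun l' H' => Hls l' (in_cons _ _ _ H')) (fun z => h z + (draw o z - mean l z)))
      as [ch [Hch Hle']].
    exists (o :: ch). split; [constructor; auto|].
    rewrite (psi_ext _ _ _ _ _ (fun z => (h z + (draw o z - mean l z)) + lsum ch (fun o => draw o z)
                                          - lsum ls (fun l => mean l z)))
      by (intros; rewrite !lsum_cons; ring).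
    rewrite lsum_cons. lra.
Qed.

Lemma variance_le {A} (l : list (outcome A)) w : is_lottery l ->
  variance l <= lsum l (fun o => prob o * emp_sq n x x' (fun z => draw o z - w z)).
Proof.
  intros Hl.
  rewrite (lsum_ext _ _ (fun o => prob o * emp_sq n x x' (fun z => draw o z - mean l z)
      + prob o * emp_lin n x x' (fun i => 2 * (mean l (x i) - w (x i)))
                               (fun i => 2 * (mean l (x' i) - w (x' i)))
                   (fun z => draw o z - mean l z)
      + emp_sq n x x' (fun z => mean l z - w z) * prob o)).
  2:{ intros o _. rewrite (emp_sq_ext _ _ _ _ (fun z => (draw o z - mean l z) + (mean l z - w z)))
        by (intros; ring).
      rewrite emp_sq_add. ring. }
  rewrite !lsum_plus, lottery_lin_centered, lsum_scal by auto.
  destruct Hl as [Hsum _]. rewrite Hsum. unfold variance.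
  pose proof (emp_sq_nonneg n x x' (fun z => mean l z - w z)). lra.
Qed.
End Variance.

(** * Truncation *)

Definition clip (B t : R) := Rmin (Rabs t) B * sgn t.

Lemma clip_spec B t : 0 < B ->
  (-B <= t <= B /\ clip B t = t) \/ (B < t /\ clip B t = B) \/ (t < -B /\ clip B t = -B).
Proof.
  intros HB. unfold clip, sgn.
  destruct (Rlt_dec 0 t); [|destruct (Rlt_dec t 0)].
  - rewrite Rabs_right by lra. destruct (Rle_dec t B).
    + left. rewrite Rmin_left by lra. split; [lra|ring].
    + right; left. rewrite Rmin_right by lra. split; [lra|ring].
  - rewrite Rabs_left by lra. destruct (Rle_dec (-t) B).
    + left. rewrite Rmin_left by lra. split; [lra|ring].
    + right; right. rewrite Rmin_right by lra. split; [lra|ring].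
  - left. replace t with 0 by lra. split; [lra|ring].
Qed.

Lemma clip_bound B t : 0 < B -> -B <= clip B t <= B.
Proof. intros HB. destruct (clip_spec B t HB) as [[? ->]|[[? ->]|[? ->]]]; lra. Qed.

Lemma clip_lipschitz B s t : 0 < B -> Rabs (clip B s - clip B t) <= Rabs (s - t).
Proof.
  intros HB.
  destruct (clip_spec B s HB) as [[? ->]|[[? ->]|[? ->]]];
  destruct (clip_spec B t HB) as [[? ->]|[[? ->]|[? ->]]];
  unfold Rabs; repeat destruct Rcase_abs; lra.
Qed.

Lemma mul_le_of_abs_le p q P Q : Rabs p <= P -> Rabs q <= Q -> p * q <= P * Q.
Proof.
  intros Hp Hq. apply Rle_trans with (Rabs (p * q)); [apply Rle_abs|].
  rewrite Rabs_mult. apply Rmult_le_compat; auto; apply Rabs_pos.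
Qed.

Lemma clip_sq_le B y t : 0 < B ->
  (y - clip B t) ^ 2 <= (y - t) ^ 2 + (if Rlt_dec B (Rabs y) then (Rabs y - B) ^ 2 else 0).
Proof.
  intros HB. pose proof (pow2_ge_0 (y - t)).
  destruct (Rlt_dec B (Rabs y)) as [Hy|Hy]; unfold Rabs in *; destruct Rcase_abs;
  destruct (clip_spec B t HB) as [[? ->]|[[? ->]|[? ->]]];
  pose proof (pow2_ge_0 (y - B)); pose proof (pow2_ge_0 (- y - B)); try lra;
  first [ assert (0 <= (t - B) * (t + B - 2 * y)) by (apply Rmult_le_pos; lra); nra
        | assert (0 <= (-B - t) * (2 * y - t + B)) by (apply Rmult_le_pos; lra); nra ].
Qed.

Lemma clip_sq_shift B y a b : -B <= a <= B -> -B <= b <= B ->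
  (y - b) ^ 2 <= (y - a) ^ 2 + 4 * B * Rabs (a - b)
                 + (if Rlt_dec B (Rabs y) then 4 * B * (Rabs y - B) else 0).
Proof.
  intros Ha Hb. replace ((y - b) ^ 2) with ((y - a) ^ 2 + (a - b) * (2 * y - a - b)) by ring.
  assert (Hab : Rabs (a - b) <= 2 * B) by (unfold Rabs; destruct Rcase_abs; lra).
  destruct (Rlt_dec B (Rabs y)) as [Hy|Hy];
    [destruct (Rcase_abs y); [rewrite (Rabs_left y) in * by lra|rewrite (Rabs_right y) in * by lra]|].
  - replace ((a - b) * (2 * y - a - b)) with ((a - b) * (2 * (y + B)) + (a - b) * (- 2 * B - a - b)) by ring.
    pose proof (mul_le_of_abs_le (a - b) (2 * (y + B)) (2 * B) (2 * (- y - B)) Hab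
      ltac:(unfold Rabs; destruct Rcase_abs; lra)).
    pose proof (mul_le_of_abs_le (a - b) (- 2 * B - a - b) (Rabs (a - b)) (4 * B) (Rle_refl _)
      ltac:(unfold Rabs; destruct Rcase_abs; lra)).
    lra.
  - replace ((a - b) * (2 * y - a - b)) with ((a - b) * (2 * (y - B)) + (a - b) * (2 * B - a - b)) by ring.
    pose proof (mul_le_of_abs_le (a - b) (2 * (y - B)) (2 * B) (2 * (y - B)) Hab
      ltac:(unfold Rabs; destruct Rcase_abs; lra)).
    pose proof (mul_le_of_abs_le (a - b) (2 * B - a - b) (Rabs (a - b)) (4 * B) (Rle_refl _)
      ltac:(unfold Rabs; destruct Rcase_abs; lra)).
    lra.
  - assert (Rabs y <= B) by lra.
    pose proof (mul_le_of_abs_le (a - b) (2 * y - a - b) (Rabs (a - b)) (4 * B) (Rle_refl _)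
      ltac:(unfold Rabs in *; repeat destruct Rcase_abs; lra)). lra.
Qed.

Lemma clip_sq_loss B y g gt : 0 < B ->
  (y - clip B gt) ^ 2 <= (y - g) ^ 2 + 4 * B * Rabs (gt - g)
     + 2 * (y ^ 2 - B ^ 2) * (if Rlt_dec B (Rabs y) then 1 else 0).
Proof.
  intros HB.
  pose proof (clip_sq_le B y g HB) as Hclip.
  pose proof (clip_sq_shift B y (clip B g) (clip B gt) (clip_bound B g HB) (clip_bound B gt HB)) as Hshift.
  pose proof (clip_lipschitz B g gt HB) as Hlip. rewrite (Rabs_minus_sym g gt) in Hlip.
  assert (4 * B * Rabs (clip B g - clip B gt) <= 4 * B * Rabs (gt - g)) by (apply Rmult_le_compat_l; lra).
  destruct (Rlt_dec B (Rabs y)) as [Hy|Hy]; [|lra].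
  rewrite <- (pow2_abs y). nra.
Qed.

Lemma clip_sq_dist B f g gt : 0 < B ->
  (clip B gt - clip B f) ^ 2 <= (g - f) ^ 2 + 4 * B * Rabs (gt - g).
Proof.
  intros HB.
  pose proof (clip_bound B g HB). pose proof (clip_bound B gt HB). pose proof (clip_bound B f HB).
  pose proof (clip_lipschitz B gt g HB). pose proof (clip_lipschitz B g f HB).
  replace ((clip B gt - clip B f) ^ 2) with
    ((clip B g - clip B f) ^ 2 + (clip B gt - clip B g) * (clip B gt + clip B g - 2 * clip B f)) by ring.
  assert ((clip B g - clip B f) ^ 2 <= (g - f) ^ 2).
  { rewrite <- (pow2_abs (clip B g - clip B f)), <- (pow2_abs (g - f)).
    pose proof (Rabs_pos (clip B g - clip B f)). nra. }
  assert ((clip B gt - clip B g) * (clip B gt + clip B g - 2 * clip B f) <= Rabs (gt - g) * (4 * B)).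
  { apply Rle_trans with (Rabs ((clip B gt - clip B g) * (clip B gt + clip B g - 2 * clip B f)));
      [apply Rle_abs|]. rewrite Rabs_mult.
    apply Rmult_le_compat; try apply Rabs_pos; auto. unfold Rabs; destruct Rcase_abs; lra. }
  lra.
Qed.

Lemma excess_le_psi n B y (x x' : nat -> vec) g gt f : (0 < n)%nat -> 0 < B ->
  excess n B y x x' gt f <=
  psi n x x' (fun i => f (x i) - y i) (fun z => g z - f z)
  + 4 * B * emp_l1 n x x' (fun z => gt z - g z) + Tn n B y / INR n.
Proof.
  intros Hn HB. assert (Hn' : 0 < INR n) by (apply lt_0_INR; auto).
  unfold excess, psi, emp_l1, Tn.
  match goal with |- / _ * ?S1 - / _ * ?S2 + / _ * ?S3 <= / _ * ?S4 + 4 * B * (/ _ * ?S5) + 2 * ?S6 / _ =>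
    replace (/ INR n * S1 - / INR n * S2 + / INR n * S3) with (/ INR n * (S1 + - S2 + S3)) by ring;
    replace (/ INR n * S4 + 4 * B * (/ INR n * S5) + 2 * S6 / INR n)
      with (/ INR n * (S4 + (4 * B) * S5 + 2 * S6)) by (field; lra) end.
  rewrite <- sumR_opp, <- !sumR_scal, <- !sumR_plus.
  apply Rmult_le_compat_l; [left; apply Rinv_0_lt_compat; auto|].
  apply sumR_le. intros i _. unfold trunc. fold (clip B (gt (x i))) (clip B (gt (x' i))) (clip B (f (x' i))).
  pose proof (clip_sq_loss B (y i) (g (x i)) (gt (x i)) HB).
  pose proof (clip_sq_dist B (f (x' i)) (g (x' i)) (gt (x' i)) HB).
  lra.
Qed.

(** * Empirical nets *)

Definition emp_close n (x x' : nat -> vec) eps (h ht : vec -> R) :=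
  / (2 * INR n) * sumR n (fun i => Rabs (h (x i) - ht (x i)) ^ 2)
  + / (2 * INR n) * sumR n (fun i => Rabs (h (x' i) - ht (x' i)) ^ 2) <= eps ^ 2.

Lemma net_select H n x x' eps M Ht hs : emp_net H n x x' eps M Ht -> (forall h, In h hs -> H h) ->
  exists hts, Forall2 (emp_close n x x' eps) hs hts /\ forall h, In h hts -> In h Ht.
Proof.
  intros [_ [_ [_ Hnet]]]. induction hs as [|h hs IH]; intros Hh.
  - exists []. split; [constructor|intros _ []].
  - destruct IH as [hts [Hclose Hin]]; [intros; apply Hh; right; auto|].
    destruct (Hnet h (Hh h (in_eq _ _))) as [ht [Hht Hc]].
    exists (ht :: hts). split; [constructor; auto|]. intros g [<-|?]; auto.
Qed.

Lemma ftilde_lsum v m0 hs z : ftilde v m0 hs z = v / INR m0 * lsum hs (fun h => h z).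
Proof. reflexivity. Qed.

Section Nets.
Variable n : nat.
Variables x x' : nat -> vec.
Hypothesis n_pos : (0 < n)%nat.
Variable eps : R.

Lemma emp_close_emp_sq h ht :
  emp_close n x x' eps h ht -> emp_sq n x x' (fun z => ht z - h z) <= 2 * eps ^ 2.
Proof.
  intros Hc. assert (0 < INR n) by (apply lt_0_INR; auto). unfold emp_close, emp_sq in *.
  rewrite <- Rmult_plus_distr_l, <- sumR_plus in Hc.
  replace (/ INR n * sumR n (fun i => (ht (x i) - h (x i)) ^ 2 + (ht (x' i) - h (x' i)) ^ 2))
    with (2 * (/ (2 * INR n) *
               sumR n (fun i => Rabs (h (x i) - ht (x i)) ^ 2 + Rabs (h (x' i) - ht (x' i)) ^ 2))).
  - apply Rmult_le_compat_l; [lra|exact Hc].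
  - rewrite (sumR_ext _ _ (fun i => (ht (x i) - h (x i)) ^ 2 + (ht (x' i) - h (x' i)) ^ 2))
      by (intros; rewrite !pow2_abs; ring).
    field. lra.
Qed.

Lemma net_sum_l1 hs hts : 0 <= eps -> Forall2 (emp_close n x x' eps) hs hts ->
  emp_l1 n x x' (fun z => lsum hts (fun h => h z) - lsum hs (fun h => h z)) <= 2 * INR (length hs) * eps.
Proof.
  intros He. induction 1 as [|h ht hs hts Hc _ IH].
  - unfold emp_l1.
    rewrite (sumR_ext _ _ (fun _ => 0)), sumR_const by (intros; rewrite !lsum_nil, Rminus_0_r, Rabs_R0; ring).
    cbn. lra.
  - cbn [length]. rewrite S_INR.
    rewrite (emp_l1_ext _ _ _ _ (fun z => (ht z - h z) + (lsum hts (fun h => h z) - lsum hs (fun h => h z))))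
      by (intros; rewrite !lsum_cons; ring).
    pose proof (emp_l1_le_of_emp_sq n x x' n_pos _ eps He (emp_close_emp_sq h ht Hc)).
    pose proof (emp_l1_add_le n x x' n_pos (fun z => ht z - h z)
                  (fun z => lsum hts (fun h => h z) - lsum hs (fun h => h z))).
    lra.
Qed.

Lemma net_sum_sq hs hts : Forall2 (emp_close n x x' eps) hs hts ->
  emp_sq n x x' (fun z => lsum hts (fun h => h z) - lsum hs (fun h => h z))
  <= INR (length hs) ^ 2 * (2 * eps ^ 2).
Proof.
  induction 1 as [|h ht hs hts Hc Htail IH].
  - rewrite (emp_sq_ext _ _ _ _ (fun z => 0 * 0)), emp_sq_scal by (intros; rewrite !lsum_nil; ring).
    cbn. lra.
  - cbn [length]. rewrite S_INR.
    rewrite (emp_sq_ext _ _ _ _ (fun z => (ht z - h z) + (lsum hts (fun h => h z) - lsum hs (fun h => h z))))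
      by (intros; rewrite !lsum_cons; ring).
    pose proof (emp_close_emp_sq h ht Hc) as Hhead.
    destruct (Rle_lt_dec (INR (length hs)) 0) as [Hk|Hk].
    + destruct hs; [|cbn [length] in Hk; rewrite S_INR in Hk; pose proof (pos_INR (length hs)); lra].
      inversion Htail; subst.
      rewrite (emp_sq_ext _ _ _ _ (fun z => ht z - h z)) by (intros; rewrite !lsum_nil; ring).
      cbn. lra.
    (* Young's inequality with weight [k = length hs]. *)
    + eapply Rle_trans; [apply (emp_sq_add_le n x x' n_pos _ _ (INR (length hs)) Hk)|].
      set (k := INR (length hs)) in *. pose proof (pow2_ge_0 eps).
      apply Rle_trans with ((1 + k) * (2 * eps ^ 2) + (1 + / k) * (k ^ 2 * (2 * eps ^ 2))).
      * apply Rplus_le_compat; apply Rmult_le_compat_l; auto; try lra.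
        pose proof (Rinv_0_lt_compat k Hk). lra.
      * right. field. lra.
Qed.

End Nets.

(** * Maurey's method *)

Lemma H_abs_le1 d phi Lambda H h : phi_ok phi -> H_ok d phi Lambda H -> H h -> forall z, Rabs (h z) <= 1.
Proof.
  intros [Hphi _] [HH _] Hh z. destruct (HH h Hh) as [->|[s [th [Hs [_ ->]]]]].
  - rewrite Rabs_R0; lra.
  - rewrite Rabs_mult. replace (Rabs s) with 1 by (destruct Hs; subst; unfold Rabs; destruct Rcase_abs; lra).
    specialize (Hphi (dot d th z)). lra.
Qed.

Lemma comb_weight_nonneg H L : comb_ok H L -> 0 <= comb_weight L.
Proof. intros Hc. apply lsum_nonneg. intros q Hq. apply (Hc q Hq). Qed.

Lemma comb_fun_abs_le d phi Lambda H L z : phi_ok phi -> H_ok d phi Lambda H -> comb_ok H L ->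
  Rabs (comb_fun L z) <= comb_weight L.
Proof.
  intros Hphi HH Hc. change (Rabs (lsum L (fun q => fst q * snd q z)) <= lsum L fst).
  induction L as [|q L IH]; [rewrite !lsum_nil, Rabs_R0; lra|].
  destruct (Hc q (in_eq _ _)) as [Hb Hq]. rewrite !lsum_cons.
  pose proof (IH (fun p Hp => Hc p (in_cons _ _ _ Hp))).
  pose proof (H_abs_le1 d phi Lambda H _ Hphi HH Hq z).
  eapply Rle_trans; [apply Rabs_triang|]. rewrite Rabs_mult, (Rabs_right (fst q)) by lra. nra.
Qed.

Lemma lsum_draw_ftilde v m0 (ch : list (outcome (vec -> R))) z :
  (forall o, In o ch -> forall z, draw o z = v / INR m0 * label o z) ->
  lsum ch (fun o => draw o z) = ftilde v m0 (map label ch) z.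
Proof.
  intros Hch. rewrite ftilde_lsum, lsum_map, <- lsum_scal. apply lsum_ext. intros o Ho. apply Hch; auto.
Qed.

(* Maurey's lottery: its mean is [f / m0], so the means of [m0] independent draws add up to [f]. *)
Definition maurey_lottery v m0 (L : list (R * (vec -> R))) : list (outcome (vec -> R)) :=
  map (fun q => Outcome (fst q / v) (fun z => v / INR m0 * snd q z) (snd q)) L
  ++ [Outcome (1 - comb_weight L / v) (fun _ => 0) (fun _ => 0)].

Section Maurey.
Variables (d : nat) (phi : R -> R) (Lambda : R) (H : (vec -> R) -> Prop).
Hypothesis Hphi : phi_ok phi.
Hypothesis HH : H_ok d phi Lambda H.
Variables (v : R) (m0 : nat) (L : list (R * (vec -> R))).
Hypothesis v_pos : 0 < v.
Hypothesis m0_pos : (0 < m0)%nat.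
Hypothesis HL : comb_ok H L.
Hypothesis L_weight : comb_weight L <= v.

Let m0_pos' : 0 < INR m0.
Proof. apply lt_0_INR; auto. Qed.

Lemma maurey_is_lottery : is_lottery (maurey_lottery v m0 L).
Proof.
  split.
  - unfold maurey_lottery. rewrite lsum_app, lsum_map, lsum_cons, lsum_nil. cbn [prob].
    rewrite (lsum_ext _ _ (fun q => / v * fst q)), lsum_scal by (intros; unfold Rdiv; ring).
    change (lsum L fst) with (comb_weight L). field. lra.
  - intros o Ho. apply in_app_or in Ho. destruct Ho as [Ho|[<-|[]]].
    + apply in_map_iff in Ho. destruct Ho as [q [<- Hq]]. cbn [prob].
      destruct (HL q Hq). apply Rle_mult_inv_pos; lra.
    + cbn [prob]. assert (comb_weight L / v <= 1) by (apply Rmult_le_reg_r with v; [lra|]; field_simplify; lra).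
      lra.
Qed.

Lemma maurey_outcome o : In o (maurey_lottery v m0 L) ->
  H (label o) /\ forall z, draw o z = v / INR m0 * label o z.
Proof.
  intros Ho. apply in_app_or in Ho. destruct Ho as [Ho|[<-|[]]].
  - apply in_map_iff in Ho. destruct Ho as [q [<- Hq]]. cbn. split; auto. apply (HL q Hq).
  - cbn. split; [apply HH|intros; ring].
Qed.

Lemma maurey_mean z : mean (maurey_lottery v m0 L) z = comb_fun L z / INR m0.
Proof.
  unfold mean, maurey_lottery. rewrite lsum_app, lsum_map, lsum_cons, lsum_nil. cbn [prob draw].
  rewrite (lsum_ext _ _ (fun q => / INR m0 * (fst q * snd q z))), lsum_scal by (intros; field; lra).
  change (lsum L (fun q => fst q * snd q z)) with (comb_fun L z). field; lra.
Qed.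

Lemma maurey_variance n x x' : (0 < n)%nat ->
  variance n x x' (maurey_lottery v m0 L) <= 2 * v * comb_weight L / INR m0 ^ 2.
Proof.
  intros Hn. eapply Rle_trans; [apply (variance_le n x x' _ (fun _ => 0) maurey_is_lottery)|].
  unfold maurey_lottery. rewrite lsum_app, lsum_map, lsum_cons, lsum_nil. cbn [prob draw].
  rewrite (emp_sq_ext _ _ _ _ (fun z => 0 * 0)), emp_sq_scal by (intros; ring).
  rewrite (lsum_ext _ _ (fun q => fst q / v * ((v / INR m0) ^ 2 * emp_sq n x x' (snd q))))
    by (intros; rewrite <- emp_sq_scal; f_equal; apply emp_sq_ext; intros; ring).
  apply Rle_trans with (lsum L (fun q => (2 * v / INR m0 ^ 2) * fst q)).
  - replace (0 ^ 2 * emp_sq n x x' (fun _ => 0)) with 0 by ring. rewrite Rmult_0_r, !Rplus_0_r.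
    apply lsum_le. intros q Hq. destruct (HL q Hq) as [Hb Hh].
    pose proof (emp_sq_le2 n x x' Hn (snd q) (H_abs_le1 d phi Lambda H _ Hphi HH Hh)).
    replace (2 * v / INR m0 ^ 2 * fst q) with (fst q / v * ((v / INR m0) ^ 2 * 2)) by (field; lra).
    apply Rmult_le_compat_l; [apply Rle_mult_inv_pos; lra|].
    apply Rmult_le_compat_l; [apply pow2_ge_0|lra].
  - rewrite lsum_scal. change (lsum L fst) with (comb_weight L). right; field; lra.
Qed.

Lemma psi_maurey n x x' c F : (0 < n)%nat ->
  exists hs, length hs = m0 /\ (forall h, In h hs -> H h) /\
  psi n x x' c (fun z => ftilde v m0 hs z - F z)
  <= psi n x x' c (fun z => comb_fun L z - F z) + 2 * v * comb_weight L / INR m0.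
Proof.
  intros Hn.
  destruct (psi_lotteries n x x' c (repeat (maurey_lottery v m0 L) m0)
              (fun l Hl => eq_ind _ _ maurey_is_lottery _ (eq_sym (repeat_spec _ _ _ Hl)))
              (fun z => comb_fun L z - F z)) as [ch [Hch Hle]].
  destruct (Forall2_repeat _ _ _ _ Hch) as [Hlen Hmem].
  assert (Hout : forall o, In o ch -> H (label o) /\ forall z, draw o z = v / INR m0 * label o z)
    by (intros o Ho; apply maurey_outcome, (Hmem o Ho)).
  exists (map label ch). split; [|split].
  - rewrite length_map; auto.
  - intros h Hh. apply in_map_iff in Hh. destruct Hh as [o [<- Ho]]. apply (Hout o Ho).
  - rewrite (psi_ext _ _ _ _ _ (fun z => comb_fun L z - F z + lsum ch (fun o => draw o z)
                                         - lsum (repeat (maurey_lottery v m0 L) m0) (fun l => mean l z))).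
    + rewrite lsum_repeat in Hle. pose proof (maurey_variance n x x' Hn).
      apply Rle_trans with (psi n x x' c (fun z => comb_fun L z - F z)
                              + INR m0 * (2 * v * comb_weight L / INR m0 ^ 2)); [nra|].
      right; field; lra.
    + intros z. rewrite lsum_repeat, maurey_mean, (lsum_draw_ftilde v m0) by (intros; apply Hout; auto).
      field. lra.
Qed.

End Maurey.

(** * Sampling stratified by an [eps1]-net *)

Definition floor_nat (r : R) : nat := Z.to_nat (up r - 1).

Lemma floor_nat_spec r : 0 <= r -> INR (floor_nat r) <= r < INR (floor_nat r) + 1.
Proof.
  intros Hr. destruct (archimed r) as [H1 H2]. unfold floor_nat.
  assert (0 <= up r - 1)%Z by (assert (0 < IZR (up r)) by lra; apply lt_IZR in H; lia).
  rewrite INR_IZR_INZ, Z2Nat.id, minus_IZR by auto. cbn. lra.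
Qed.

Definition rounding_lottery (r : R) (a : vec -> R) : list (outcome nat) :=
  let k := floor_nat r in
  [Outcome (1 - (r - INR k)) (fun z => INR k * a z) k;
   Outcome (r - INR k) (fun z => INR (S k) * a z) (S k)].

Section Rounding.
Variables (r : R) (a : vec -> R).
Hypothesis r_nonneg : 0 <= r.

Let frac_range : 0 <= r - INR (floor_nat r) < 1.
Proof. pose proof (floor_nat_spec r r_nonneg). lra. Qed.

Lemma rounding_is_lottery : is_lottery (rounding_lottery r a).
Proof.
  split.
  - cbn. ring.
  - intros o [<-|[<-|[]]]; cbn; lra.
Qed.

Lemma rounding_mean z : mean (rounding_lottery r a) z = r * a z.
Proof. unfold mean. cbn -[INR]. rewrite S_INR. ring. Qed.

Lemma rounding_variance n x x' : variance n x x' (rounding_lottery r a) <= emp_sq n x x' a / 4.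
Proof.
  unfold variance.
  replace (mean (rounding_lottery r a)) with (fun z => r * a z)
    by (extensionality z; symmetry; apply rounding_mean).
  unfold rounding_lottery. rewrite !lsum_cons, lsum_nil. cbn [prob draw].
  set (k := floor_nat r) in *. cbv beta.
  assert (E : forall m, emp_sq n x x' (fun z => m * a z - r * a z) = (m - r) ^ 2 * emp_sq n x x' a)
    by (intros m; rewrite <- emp_sq_scal; apply emp_sq_ext; intros; ring).
  rewrite !E.
  rewrite S_INR. pose proof (emp_sq_nonneg n x x' a).
  replace ((1 - (r - INR k)) * ((INR k - r) ^ 2 * emp_sq n x x' a)
           + ((r - INR k) * ((INR k + 1 - r) ^ 2 * emp_sq n x x' a) + 0))
    with ((r - INR k) * (1 - (r - INR k)) * emp_sq n x x' a) by ring.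
  assert (0 <= (r - INR k - 1 / 2) ^ 2) by apply pow2_ge_0. nra.
Qed.

Lemma rounding_outcome o : In o (rounding_lottery r a) -> 0 < prob o ->
  (forall z, draw o z = INR (label o) * a z) /\ INR (label o) <= r + 1 /\ (r = 0 -> label o = 0%nat).
Proof.
  pose proof (floor_nat_spec r r_nonneg) as Hk.
  intros [<-|[<-|[]]] Hp; cbn [prob draw label] in *; (split; [auto|split]).
  - lra.
  - intros ->. destruct (floor_nat 0) as [|k]; [auto|]. rewrite S_INR in Hk. pose proof (pos_INR k). lra.
  - rewrite S_INR. lra.
  - intros ->. exfalso. destruct (floor_nat 0) as [|k]; [cbn in Hp; lra|].
    rewrite S_INR in Hk. pose proof (pos_INR k). lra.
Qed.

End Rounding.

(* Index of some [eps]-close net point; a junk index when there is none. *)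
Definition nearest n (x x' : nat -> vec) eps (Ht : list (vec -> R)) (h : vec -> R) : nat :=
  epsilon (inhabits 0%nat) (fun j => (j < length Ht)%nat /\ emp_close n x x' eps h (nth j Ht (fun _ => 0))).

Lemma nearest_spec H n x x' eps M Ht h : emp_net H n x x' eps M Ht -> H h ->
  (nearest n x x' eps Ht h < M)%nat /\
  emp_close n x x' eps h (nth (nearest n x x' eps Ht h) Ht (fun _ => 0)).
Proof.
  intros [_ [Hlen [_ Hnet]]] Hh. unfold nearest. rewrite <- Hlen.
  apply (epsilon_spec (inhabits 0%nat) (fun j => (j < length Ht)%nat /\ _)).
  destruct (Hnet h Hh) as [ht [Hin Hc]]. destruct (In_nth Ht ht (fun _ => 0) Hin) as [j [Hj <-]].
  exists j; auto.
Qed.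

Definition weighted_lottery (s : R) (L : list (R * (vec -> R))) : list (outcome (vec -> R)) :=
  map (fun q => Outcome (fst q / comb_weight L) (fun z => s * snd q z) (snd q)) L.

Lemma weighted_is_lottery H s L : comb_ok H L -> 0 < comb_weight L -> is_lottery (weighted_lottery s L).
Proof.
  intros HL Hw. split.
  - unfold weighted_lottery. rewrite lsum_map. cbn [prob].
    rewrite (lsum_ext _ _ (fun q => / comb_weight L * fst q)), lsum_scal by (intros; unfold Rdiv; ring).
    change (lsum L fst) with (comb_weight L). field. lra.
  - intros o Ho. apply in_map_iff in Ho. destruct Ho as [q [<- Hq]]. cbn [prob].
    destruct (HL q Hq). apply Rle_mult_inv_pos; lra.
Qed.

Lemma weighted_mean s L z : 0 < comb_weight L ->
  mean (weighted_lottery s L) z = s * (comb_fun L z / comb_weight L).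
Proof.
  intros Hw. unfold mean, weighted_lottery. rewrite lsum_map. cbn [prob draw].
  rewrite (lsum_ext _ _ (fun q => s / comb_weight L * (fst q * snd q z))), lsum_scal by (intros; field; lra).
  change (lsum L (fun q => fst q * snd q z)) with (comb_fun L z). field. lra.
Qed.

Section Stratified.
Variables (d : nat) (phi : R -> R) (Lambda : R) (H : (vec -> R) -> Prop).
Hypothesis Hphi : phi_ok phi.
Hypothesis HH : H_ok d phi Lambda H.
Variables (n : nat) (x x' : nat -> vec).
Hypothesis n_pos : (0 < n)%nat.
Variables (eps1 : R) (M1 : nat) (Ht1 : list (vec -> R)).
Hypothesis Hnet1 : emp_net H n x x' eps1 M1 Ht1.
Variables (v : R) (m0 : nat) (L : list (R * (vec -> R))).
Hypothesis v_pos : 0 < v.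
Hypothesis m0_pos : (0 < m0)%nat.
Hypothesis HL : comb_ok H L.
Hypothesis L_weight : comb_weight L <= v.

Let m0_pos' : 0 < INR m0.
Proof. apply lt_0_INR; auto. Qed.

Let cell (h : vec -> R) := nearest n x x' eps1 Ht1 h.

Definition cell_terms j := filter (fun q => Nat.eqb (cell (snd q)) j) L.
Definition cell_mass j := comb_weight (cell_terms j).
(* [0 / 0 = 0] when cell [j] is empty. *)
Definition cell_avg j z := comb_fun (cell_terms j) z / cell_mass j.

Lemma cell_terms_spec j q : In q (cell_terms j) ->
  In q L /\ emp_close n x x' eps1 (snd q) (nth j Ht1 (fun _ => 0)).
Proof.
  unfold cell_terms. rewrite filter_In. intros [Hq E]. apply Nat.eqb_eq in E.
  split; auto. rewrite <- E. apply (nearest_spec H n x x' eps1 M1 Ht1); auto. apply (HL q Hq).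
Qed.

Lemma cell_terms_ok j : comb_ok H (cell_terms j).
Proof. intros q Hq. apply HL, (cell_terms_spec j q Hq). Qed.

Lemma cell_mass_nonneg j : 0 <= cell_mass j.
Proof. apply (comb_weight_nonneg H), cell_terms_ok. Qed.

Lemma cell_mass_avg j z : cell_mass j * cell_avg j z = comb_fun (cell_terms j) z.
Proof.
  pose proof (comb_fun_abs_le d phi Lambda H (cell_terms j) z Hphi HH (cell_terms_ok j)).
  unfold cell_avg. fold (cell_mass j) in *. destruct (Req_dec (cell_mass j) 0) as [E|E].
  - rewrite E in *. assert (comb_fun (cell_terms j) z = 0) by (unfold Rabs in *; destruct Rcase_abs; lra).
    lra.
  - field. auto.
Qed.

Lemma cell_avg_abs_le1 j z : Rabs (cell_avg j z) <= 1.
Proof.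
  pose proof (comb_fun_abs_le d phi Lambda H (cell_terms j) z Hphi HH (cell_terms_ok j)).
  pose proof (cell_mass_nonneg j). unfold cell_avg. fold (cell_mass j) in *.
  destruct (Req_dec (cell_mass j) 0) as [E|E].
  - rewrite E, Rdiv_0_r, Rabs_R0. lra.
  - unfold Rdiv. rewrite Rabs_mult, Rabs_inv, (Rabs_right (cell_mass j)) by lra.
    apply Rmult_le_reg_r with (cell_mass j); [lra|]. field_simplify; lra.
Qed.

Lemma sumR_cells F : sumR M1 (fun j => lsum (cell_terms j) F) = lsum L F.
Proof.
  apply lsum_partition. intros q Hq. apply (nearest_spec H n x x' eps1 M1 Ht1); auto. apply (HL q Hq).
Qed.

Let cell_ratio j := INR m0 * cell_mass j / v.

Let cell_ratio_nonneg j : 0 <= cell_ratio j.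
Proof. pose proof (cell_mass_nonneg j). apply Rle_mult_inv_pos; [nra|lra]. Qed.

Definition cell_rounding j := rounding_lottery (cell_ratio j) (fun z => v / INR m0 * cell_avg j z).

Lemma cell_rounding_mean j z : mean (cell_rounding j) z = comb_fun (cell_terms j) z.
Proof.
  unfold cell_rounding. rewrite rounding_mean, <- cell_mass_avg by auto. unfold cell_ratio. field; lra.
Qed.

Lemma cell_rounding_variance j : variance n x x' (cell_rounding j) <= v ^ 2 / (2 * INR m0 ^ 2).
Proof.
  eapply Rle_trans; [apply rounding_variance; auto|].
  rewrite emp_sq_scal. pose proof (emp_sq_le2 n x x' n_pos _ (cell_avg_abs_le1 j)).
  apply Rle_trans with ((v / INR m0) ^ 2 * 2 / 4).
  - apply Rmult_le_compat_r; [lra|]. apply Rmult_le_compat_l; [apply pow2_ge_0|lra].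
  - right; field; lra.
Qed.

(* First stage: randomised rounding of the ideal counts [m0 * cell_mass j / v]. *)
Lemma stratified_counts c F : exists m : nat -> nat,
  (forall j, (j < M1)%nat -> INR (m j) <= cell_ratio j + 1 /\ (cell_mass j = 0 -> m j = 0%nat)) /\
  psi n x x' c (fun z => sumR M1 (fun j => INR (m j) * (v / INR m0 * cell_avg j z)) - F z)
  <= psi n x x' c (fun z => comb_fun L z - F z) + INR M1 * (v ^ 2 / (2 * INR m0 ^ 2)).
Proof.
  set (rounds := map cell_rounding (seq 0 M1)).
  assert (Hrounds : forall l, In l rounds -> is_lottery l).
  { intros l Hl. apply in_map_iff in Hl. destruct Hl as [j [<- _]]. apply rounding_is_lottery; auto. }
  destruct (psi_lotteries n x x' c rounds Hrounds (fun z => comb_fun L z - F z)) as [ch [Hch Hle]].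
  assert (Hlen : length rounds = M1) by (unfold rounds; rewrite length_map, length_seq; auto).
  set (dflt := Outcome 0 (fun _ => 0) 0%nat).
  set (m j := label (nth j ch dflt)).
  assert (Hm : forall j, (j < M1)%nat ->
             (forall z, draw (nth j ch dflt) z = INR (m j) * (v / INR m0 * cell_avg j z))
             /\ INR (m j) <= cell_ratio j + 1 /\ (cell_ratio j = 0 -> m j = 0%nat)).
  { intros j Hj. destruct (Forall2_nth _ _ _ dflt [] Hch j ltac:(lia)) as [Ho Hp].
    unfold rounds in Ho. rewrite nth_indep with (d' := cell_rounding 0%nat), map_nth, seq_nth in Ho
      by (rewrite ?length_map, ?length_seq; lia).
    apply (rounding_outcome _ _ (cell_ratio_nonneg j) _ Ho Hp). }
  exists m. split.
  - intros j Hj. destruct (Hm j Hj) as [_ [Hr Hz]]. split; auto.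
    intros E. apply Hz. unfold cell_ratio. rewrite E. field; lra.
  - rewrite (psi_ext _ _ _ _ _ (fun z => comb_fun L z - F z + lsum ch (fun o => draw o z)
                                         - lsum rounds (fun l => mean l z))).
    + eapply Rle_trans; [apply Hle|]. apply Rplus_le_compat_l.
      unfold rounds. rewrite lsum_map, lsum_seq. rewrite <- sumR_const.
      apply sumR_le. intros j _. apply cell_rounding_variance.
    + intros z. rewrite (lsum_nth ch dflt), (Forall2_length Hch), Hlen.
      unfold rounds. rewrite lsum_map, lsum_seq.
      rewrite (sumR_ext _ (fun j => mean _ z) (fun j => lsum (cell_terms j) (fun q => fst q * snd q z)))
        by (intros; apply cell_rounding_mean).
      rewrite sumR_cells. rewrite (sumR_ext _ (fun j => draw (nth j ch dflt) z)
                                   (fun j => INR (m j) * (v / INR m0 * cell_avg j z)))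
        by (intros; apply Hm; auto).
      change (comb_fun L z) with (lsum L (fun q => fst q * snd q z)). ring.
Qed.

Definition cell_lottery j := weighted_lottery (v / INR m0) (cell_terms j).

Lemma cell_lottery_outcome j o : In o (cell_lottery j) ->
  H (label o) /\ forall z, draw o z = v / INR m0 * label o z.
Proof.
  intros Ho. apply in_map_iff in Ho. destruct Ho as [q [<- Hq]]. cbn.
  split; auto. apply (cell_terms_ok j q Hq).
Qed.

(* Every atom of cell [j] is [eps1]-close to the same net point, so the draws scatter little. *)
Lemma cell_lottery_variance j : 0 < cell_mass j ->
  variance n x x' (cell_lottery j) <= (v / INR m0) ^ 2 * (2 * eps1 ^ 2).
Proof.
  intros Hj. pose proof (weighted_is_lottery H (v / INR m0) _ (cell_terms_ok j) Hj) as Hlot.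
  eapply Rle_trans; [apply (variance_le n x x' _ (fun z => v / INR m0 * nth j Ht1 (fun _ => 0) z) Hlot)|].
  destruct Hlot as [Hsum Hnn].
  rewrite <- (Rmult_1_r ((v / INR m0) ^ 2 * _)), <- Hsum, <- lsum_scal.
  apply lsum_le. intros o Ho. rewrite (Rmult_comm _ (prob o)). apply Rmult_le_compat_l; [apply Hnn; auto|].
  unfold cell_lottery, weighted_lottery in Ho. apply in_map_iff in Ho. destruct Ho as [q [<- Hq]]. cbn [draw].
  rewrite (emp_sq_ext _ _ _ _ (fun z => - (v / INR m0) * (nth j Ht1 (fun _ => 0) z - snd q z))), emp_sq_scal
    by (intros; ring).
  replace ((- (v / INR m0)) ^ 2) with ((v / INR m0) ^ 2) by ring.
  apply Rmult_le_compat_l; [apply pow2_ge_0|].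
  apply (emp_close_emp_sq n x x' n_pos), (cell_terms_spec j q Hq).
Qed.

(* Second stage: [m j] independent draws from cell [j]. *)
Lemma stratified_draws c F (m : nat -> nat) :
  (forall j, (j < M1)%nat -> (0 < m j)%nat -> 0 < cell_mass j) ->
  exists hs, INR (length hs) = sumR M1 (fun j => INR (m j)) /\ (forall h, In h hs -> H h) /\
  psi n x x' c (fun z => ftilde v m0 hs z - F z)
  <= psi n x x' c (fun z => sumR M1 (fun j => INR (m j) * (v / INR m0 * cell_avg j z)) - F z)
     + INR (length hs) * ((v / INR m0) ^ 2 * (2 * eps1 ^ 2)).
Proof.
  intros Hmass.
  set (draws := concat (map (fun j => repeat (cell_lottery j) (m j)) (seq 0 M1))).
  assert (Hdraws : forall l, In l draws -> exists j, l = cell_lottery j /\ 0 < cell_mass j).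
  { intros l Hl. apply in_concat in Hl. destruct Hl as [l' [Hl' Hl]].
    apply in_map_iff in Hl'. destruct Hl' as [j [<- Hj]]. apply in_seq in Hj.
    exists j. split; [apply repeat_spec in Hl; auto|].
    apply Hmass; [lia|]. destruct (m j); [destruct Hl|lia]. }
  assert (Hlot : forall l, In l draws -> is_lottery l).
  { intros l Hl. destruct (Hdraws l Hl) as [j [-> Hj]].
    apply (weighted_is_lottery H); auto. apply cell_terms_ok. }
  set (counted z := sumR M1 (fun j => INR (m j) * (v / INR m0 * cell_avg j z))).
  destruct (psi_lotteries n x x' c draws Hlot (fun z => counted z - F z)) as [ch [Hch Hle]].
  assert (Hout : forall o, In o ch -> H (label o) /\ forall z, draw o z = v / INR m0 * label o z).
  { intros o Ho. destruct (Forall2_in_l _ _ _ o Hch Ho) as [l [Hl [Hol _]]].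
    destruct (Hdraws l Hl) as [j [-> _]]. apply (cell_lottery_outcome j o Hol). }
  assert (Hlen : INR (length (map label ch)) = sumR M1 (fun j => INR (m j))).
  { rewrite length_map, (Forall2_length Hch), INR_length_lsum. unfold draws.
    rewrite lsum_concat_repeat. apply sumR_ext. intros; ring. }
  exists (map label ch). split; [exact Hlen|split].
  - intros h Hh. apply in_map_iff in Hh. destruct Hh as [o [<- Ho]]. apply (Hout o Ho).
  - rewrite Hlen, (psi_ext _ _ _ _ _ (fun z => counted z - F z + lsum ch (fun o => draw o z)
                                                  - lsum draws (fun l => mean l z))).
    + eapply Rle_trans; [apply Hle|]. apply Rplus_le_compat_l.
      unfold draws. rewrite lsum_concat_repeat, (Rmult_comm (sumR M1 _)), <- sumR_scal.
      apply sumR_le. intros j Hj.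
      destruct (m j) eqn:Ej; [cbn; lra|]. rewrite Rmult_comm.
      apply Rmult_le_compat_r; [apply pos_INR|]. apply cell_lottery_variance, Hmass; auto; lia.
    + intros z. rewrite (lsum_draw_ftilde v m0) by (intros; apply Hout; auto).
      unfold draws, counted. rewrite lsum_concat_repeat.
      rewrite (sumR_ext _ (fun j => INR (m j) * mean (cell_lottery j) z)
                         (fun j => INR (m j) * (v / INR m0 * cell_avg j z))); [ring|].
      intros j Hj. destruct (m j) eqn:Ej; [cbn; ring|].
      unfold cell_lottery. rewrite weighted_mean by (apply Hmass; auto; lia). reflexivity.
Qed.

Lemma stratified_size (m : nat -> nat) : (forall j, (j < M1)%nat -> INR (m j) <= cell_ratio j + 1) ->
  sumR M1 (fun j => INR (m j)) <= INR m0 + INR M1.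
Proof.
  intros Hm. apply Rle_trans with (sumR M1 (fun j => INR m0 / v * cell_mass j + 1)).
  - apply sumR_le. intros j Hj. specialize (Hm j Hj). unfold cell_ratio in Hm. unfold Rdiv in *. lra.
  - rewrite sumR_plus, sumR_scal, sumR_const, (sumR_ext _ _ (fun j => lsum (cell_terms j) fst)), sumR_cells
      by (intros; reflexivity).
    change (lsum L fst) with (comb_weight L).
    assert (INR m0 / v * comb_weight L <= INR m0) by (apply Rmult_le_reg_r with v; [lra|]; field_simplify; nra).
    lra.
Qed.

Lemma psi_stratified c F : exists hs, (length hs <= m0 + M1)%nat /\ (forall h, In h hs -> H h) /\
  psi n x x' c (fun z => ftilde v m0 hs z - F z)
  <= psi n x x' c (fun z => comb_fun L z - F z) + v ^ 2 * INR M1 / (2 * INR m0 ^ 2)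
     + INR (length hs) * ((v / INR m0) ^ 2 * (2 * eps1 ^ 2)).
Proof.
  destruct (stratified_counts c F) as [m [Hm Hle1]].
  destruct (stratified_draws c F m) as [hs [Hlen [HhsH Hle2]]].
  { intros j Hj Hpos. destruct (Hm j Hj) as [_ Hz]. destruct (cell_mass_nonneg j) as [|E]; auto.
    specialize (Hz (eq_sym E)). lia. }
  exists hs. split; [|split; auto].
  - apply INR_le. rewrite plus_INR, Hlen. apply stratified_size. intros j Hj. apply Hm; auto.
  - replace (v ^ 2 * INR M1 / (2 * INR m0 ^ 2)) with (INR M1 * (v ^ 2 / (2 * INR m0 ^ 2))) by (field; lra).
    lra.
Qed.

End Stratified.

(** * Finitely many candidates *)

Lemma finite_min_le {T} (l : list T) (P : T -> Prop) (Phi : T -> R) K :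
  (forall eta, 0 < eta -> exists t, In t l /\ P t /\ Phi t <= K + eta) ->
  exists t, In t l /\ P t /\ Phi t <= K.
Proof.
  induction l as [|a l IH]; intros Hall.
  - destruct (Hall 1 Rlt_0_1) as [t [[] _]].
  - destruct (classic (P a /\ Phi a <= K)) as [[Pa Ha]|Hna]; [exists a; split; [left|]; auto|].
    destruct IH as [t [Ht HPt]]; [|exists t; split; [right|]; auto].
    intros eta Heta.
    assert (Hgap : exists g, 0 < g <= eta /\ (P a -> K + g < Phi a)).
    { destruct (classic (P a)) as [Pa|Pa]; [|exists eta; split; [lra|tauto]].
      exists (Rmin eta ((Phi a - K) / 2)). assert (Phi a > K) by (apply Rnot_le_lt; tauto).
      pose proof (Rmin_l eta ((Phi a - K) / 2)). pose proof (Rmin_r eta ((Phi a - K) / 2)).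
      split; [split; [apply Rmin_pos|]|intros]; lra. }
    destruct Hgap as [g [Hg Hga]]. destruct (Hall g (proj1 Hg)) as [t [[<-|Ht] [HPt Ht']]].
    + specialize (Hga HPt). lra.
    + exists t. split; [|split]; auto. lra.
Qed.

(* [multisets l K] lists, up to order, every word of length at most [K] over the alphabet [l]. *)
Fixpoint multisets {T} (l : list T) : nat -> list (list T) :=
  match l with
  | [] => fun _ => [[]]
  | g :: l' => fix ms K := match K with
                          | O => multisets l' O
                          | S K' => multisets l' (S K') ++ map (cons g) (ms K')
                          end
  end.

Lemma multisets_complete {T} (l : list T) K w : (length w <= K)%nat -> (forall h, In h w -> In h l) ->
  exists r, In r (multisets l K) /\ Permutation r w.
Proof.
  revert K w. induction l as [|g l IH]; intros K w Hlen Hw.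
  - destruct w as [|h w]; [exists []; split; [left|constructor]; auto|destruct (Hw h (in_eq _ _))].
  - revert w Hlen Hw. induction K as [|K IHK]; intros w Hlen Hw.
    + destruct w; [|cbn in Hlen; lia].
      destruct (IH 0%nat [] (le_n 0) (fun h Hh => match Hh with end)) as [r [Hr Hp]].
      exists r. split; auto.
    + cbn [multisets]. destruct (classic (In g w)) as [Hg|Hg].
      * destruct (in_split g w Hg) as [a [b ->]].
        destruct (IHK (a ++ b)) as [r [Hr Hp]].
        { rewrite length_app in *; cbn in Hlen; lia. }
        { intros h Hh. apply in_app_or in Hh. destruct Hh; apply Hw, in_or_app; [left|right; right]; auto. }
        exists (g :: r). split; [apply in_or_app; right; apply in_map; auto|].
        apply Permutation_cons_app; auto.
      * destruct (IH (S K) w Hlen) as [r [Hr Hp]].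
        { intros h Hh. destruct (Hw h Hh) as [<-|?]; [contradiction|auto]. }
        exists r. split; [apply in_or_app; left|]; auto.
Qed.

Lemma C_n_0 k : C k 0 = 1.
Proof.
  unfold C. rewrite Nat.sub_0_r. cbn. assert (INR (Factorial.fact k) <> 0) by apply INR_fact_neq_0.
  field; auto.
Qed.

Lemma multisets_length {T} (l : list T) K : INR (length (multisets l K)) = C (length l + K) K.
Proof.
  revert K. induction l as [|g l IH]; intros K.
  - cbn. unfold C. rewrite Nat.sub_diag. cbn. assert (INR (Factorial.fact K) <> 0) by apply INR_fact_neq_0.
    field; auto.
  - induction K as [|K IHK]; [cbn; rewrite IH, !C_n_0; reflexivity|].
    change (multisets (g :: l) (S K)) with (multisets l (S K) ++ map (cons g) (multisets (g :: l) K)).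
    rewrite length_app, plus_INR, length_map, IH, IHK. cbn [length].
    replace (S (length l) + S K)%nat with (S (S (length l + K))) by lia.
    replace (S (length l) + K)%nat with (S (length l + K)) by lia.
    replace (length l + S K)%nat with (S (length l + K)) by lia.
    rewrite <- (pascal (S (length l + K)) K) by lia. ring.
Qed.

Lemma ftilde_perm v m0 r w : Permutation r w -> ftilde v m0 r = ftilde v m0 w.
Proof. intros Hp. extensionality z. rewrite !ftilde_lsum, (lsum_perm _ _ _ Hp). reflexivity. Qed.

Lemma ftilde_count v m0 (Ht : list (vec -> R)) K : exists Lc : list (vec -> R),
  INR (length Lc) <= C (length Ht + K) K /\
  forall hs, (length hs <= K)%nat -> (forall h, In h hs -> In h Ht) -> In (ftilde v m0 hs) Lc.
Proof.
  exists (map (ftilde v m0) (multisets Ht K)). split; [rewrite length_map, multisets_length; lra|].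
  intros hs Hl Hh. destruct (multisets_complete Ht K hs Hl Hh) as [r [Hr Hp]].
  rewrite <- (ftilde_perm v m0 r hs Hp). apply in_map; auto.
Qed.

(* Only finitely many [ftilde] are in play, so a bound holding up to every [eta > 0] is attained. *)
Lemma ftilde_select v m0 (Ht : list (vec -> R)) K (P : nat -> Prop) (Phi : (vec -> R) -> R) bound a :
  0 <= a ->
  (forall eta, 0 < eta -> exists hs, (length hs <= K)%nat /\ P (length hs) /\
     (forall h, In h hs -> In h Ht) /\ Phi (ftilde v m0 hs) <= bound + a * eta) ->
  exists hs, (length hs <= K)%nat /\ P (length hs) /\
    (forall h, In h hs -> In h Ht) /\ Phi (ftilde v m0 hs) <= bound.
Proof.
  intros Ha Hall.
  destruct (finite_min_le (multisets Ht K)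
              (fun r => (length r <= K)%nat /\ P (length r) /\ forall h, In h r -> In h Ht)
              (fun r => Phi (ftilde v m0 r)) bound) as [r [_ [[Hl [HP Hr]] Hle]]].
  - intros eta Heta.
    destruct (Hall (eta / (a + 1))) as [hs [Hl [HP [Hh Hle]]]]; [apply Rdiv_lt_0_compat; lra|].
    destruct (multisets_complete Ht K hs Hl Hh) as [r [Hr Hp]].
    exists r. rewrite (ftilde_perm v m0 r hs Hp), (Permutation_length Hp).
    split; [auto|split; [split; [|split]; auto|]].
    + intros h Hin. apply Hh, (Permutation_in h Hp Hin).
    + apply Rle_trans with (bound + a * (eta / (a + 1))); auto.
      assert (a * (eta / (a + 1)) <= eta) by (apply Rmult_le_reg_r with (a + 1); [lra|]; field_simplify; nra).
      lra.
  - exists r. auto.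
Qed.

(** * Near-optimal representations *)

Definition comb_scale (lam : R) (L : list (R * (vec -> R))) := map (fun q => (lam * fst q, snd q)) L.

Lemma comb_scale_ok H lam L : 0 <= lam -> comb_ok H L -> comb_ok H (comb_scale lam L).
Proof.
  intros Hl HL p Hp. apply in_map_iff in Hp. destruct Hp as [q [<- Hq]].
  destruct (HL q Hq). cbn. split; auto. apply Rmult_le_pos; auto.
Qed.

Lemma comb_scale_fun lam L z : comb_fun (comb_scale lam L) z = lam * comb_fun L z.
Proof.
  change (lsum (comb_scale lam L) (fun q => fst q * snd q z) = lam * lsum L (fun q => fst q * snd q z)).
  unfold comb_scale. rewrite lsum_map, <- lsum_scal. apply lsum_ext. intros; cbn; ring.
Qed.

Lemma comb_scale_weight lam L : comb_weight (comb_scale lam L) = lam * comb_weight L.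
Proof.
  change (lsum (comb_scale lam L) fst = lam * lsum L fst).
  unfold comb_scale. rewrite lsum_map, <- lsum_scal. reflexivity.
Qed.

Lemma vf_nonneg H f vf : is_glb (vf_set H f) vf -> 0 <= vf.
Proof. intros [_ Hglb]. apply Hglb. intros s [L [HL [_ <-]]]. apply (comb_weight_nonneg H L HL). Qed.

(* [vf] is only an infimum: take a representation of weight almost [vf] and shrink it to weight [<= v]. *)
Lemma vf_near_scaled H f vf v eta : is_glb (vf_set H f) vf -> vf <= v -> 0 < v -> 0 < eta ->
  exists L' lam, comb_ok H L' /\ comb_weight L' <= v /\ comb_weight L' <= vf + eta /\
    0 <= lam <= 1 /\ 1 - lam <= eta /\ forall z, comb_fun L' z = lam * f z.
Proof.
  intros Hvf Hv Hv0 Heta. pose proof (vf_nonneg H f vf Hvf). destruct Hvf as [_ Hglb].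
  pose proof (Rmin_l eta (eta * v)). pose proof (Rmin_r eta (eta * v)).
  set (delta := Rmin eta (eta * v)) in *.
  assert (Hd : 0 < delta) by (apply Rmin_pos; nra).
  assert (Hex : exists s, vf_set H f s /\ s < vf + delta).
  { apply NNPP. intros Hno. enough (vf + delta <= vf) by lra.
    apply Hglb. intros s Hs. apply Rnot_lt_le. intros Hlt. apply Hno. exists s; auto. }
  destruct Hex as [s [[L0 [HL0 [Hf Hw]]] Hs]].
  destruct (Rle_dec s v) as [Hsv|Hsv].
  - exists L0, 1. split; [exact HL0|]. repeat split; try lra. intros z. rewrite Hf; ring.
  - assert (Hlam : 0 < v / s < 1).
    { split; [apply Rdiv_lt_0_compat; lra|]. apply Rmult_lt_reg_r with s; [lra|].
      replace (v / s * s) with v by (field; lra). lra. }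
    exists (comb_scale (v / s) L0), (v / s).
    split; [apply comb_scale_ok; auto; lra|].
    rewrite comb_scale_weight, Hw. replace (v / s * s) with v by (field; lra).
    repeat split; try lra.
    + apply Rmult_le_reg_r with s; [lra|]. replace ((1 - v / s) * s) with (s - v) by (field; lra). nra.
    + intros z. rewrite comb_scale_fun, Hf. reflexivity.
Qed.

Lemma psi_shrink n x x' c f lam : 0 <= lam <= 1 ->
  psi n x x' c (fun z => lam * f z - f z)
  <= (1 - lam) * (emp_sq n x x' f + Rabs (psi n x x' c f - emp_sq n x x' f)).
Proof.
  intros Hlam.
  rewrite (psi_ext _ _ _ _ _ (fun z => (lam - 1) * f z)), psi_scal by (intros; ring).
  pose proof (emp_sq_nonneg n x x' f). pose proof (Rle_abs (- (psi n x x' c f - emp_sq n x x' f))).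
  rewrite Rabs_Ropp in *. set (Q := emp_sq n x x' f) in *. set (A := psi n x x' c f - Q) in *.
  assert ((lam - 1) ^ 2 * Q <= (1 - lam) * Q) by (apply Rmult_le_compat_r; nra).
  assert ((1 - lam) * - A <= (1 - lam) * Rabs A) by (apply Rmult_le_compat_l; lra).
  lra.
Qed.

Lemma Tn_nonneg n B y : 0 < B -> 0 <= Tn n B y.
Proof.
  intros HB. unfold Tn. apply Rmult_le_pos; [lra|]. apply sumR_nonneg. intros i _.
  destruct (Rlt_dec B (Rabs (y i))); [|lra]. rewrite Rmult_1_r, <- (pow2_abs (y i)).
  pose proof (Rabs_pos (y i)). nra.
Qed.

Section Lemma5.
Variables (d : nat) (phi : R -> R) (Lambda : R) (H : (vec -> R) -> Prop).
Hypothesis Hphi : phi_ok phi.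
Hypothesis HH : H_ok d phi Lambda H.
Variables (n : nat) (y : nat -> R) (x x' : nat -> vec) (B : R).
Hypothesis Hn : (0 < n)%nat.
Hypothesis HB : 0 < B.
Variables (eps1 eps2 : R) (M1 M2 : nat) (Ht1 Ht2 : list (vec -> R)).
Hypothesis Heps1 : 0 <= eps1.
Hypothesis Heps2 : 0 <= eps2.
Hypothesis Hnet1 : emp_net H n x x' eps1 M1 Ht1.
Hypothesis Hnet2 : emp_net H n x x' eps2 M2 Ht2.
Variables (L : list (R * (vec -> R))) (vf : R) (m0 : nat) (v : R).
Hypothesis HL : comb_ok H L.
Hypothesis Hvf : is_glb (vf_set H (comb_fun L)) vf.
Hypothesis Hm0 : (1 <= m0)%nat.
Hypothesis Hv : vf <= v.

Local Notation f := (comb_fun L).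
Local Notation c := (fun i => comb_fun L (x i) - y i).

Let m0_pos : 0 < INR m0.
Proof. apply lt_0_INR; lia. Qed.

Let v_nonneg : 0 <= v.
Proof. pose proof (vf_nonneg H _ vf Hvf). lra. Qed.

Let Tn_term_nonneg : 0 <= Tn n B y / INR n.
Proof. apply Rle_mult_inv_pos; [apply Tn_nonneg; auto|apply lt_0_INR; auto]. Qed.

Definition psi_slope c' := emp_sq n x x' f + Rabs (psi n x x' c' f - emp_sq n x x' f).

Lemma psi_slope_nonneg c' : 0 <= psi_slope c'.
Proof.
  pose proof (emp_sq_nonneg n x x' f). pose proof (Rabs_pos (psi n x x' c' f - emp_sq n x x' f)).
  unfold psi_slope. lra.
Qed.

Lemma near_optimal_comb eta : 0 < v -> 0 < eta ->
  exists L', comb_ok H L' /\ comb_weight L' <= v /\ comb_weight L' <= vf + eta /\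
  forall c', psi n x x' c' (fun z => comb_fun L' z - f z) <= eta * psi_slope c'.
Proof.
  intros Hv0 Heta.
  destruct (vf_near_scaled H f vf v eta Hvf Hv Hv0 Heta) as [L' [lam [HL' [Hw1 [Hw2 [Hlam [Hgap Hf]]]]]]].
  exists L'. split; [|split; [|split]]; auto. intros c'.
  rewrite (psi_ext _ _ _ _ _ (fun z => lam * f z - f z)) by (intros; rewrite Hf; reflexivity).
  eapply Rle_trans; [apply psi_shrink; auto|]. apply Rmult_le_compat_r; [apply psi_slope_nonneg|lra].
Qed.

Lemma excess_net_rounding hs : (forall h, In h hs -> H h) ->
  exists hts, length hts = length hs /\ (forall h, In h hts -> In h Ht2) /\
  excess n B y x x' (ftilde v m0 hts) f
  <= psi n x x' c (fun z => ftilde v m0 hs z - f z) + 8 * B * (v / INR m0) * INR (length hs) * eps2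
     + Tn n B y / INR n.
Proof.
  intros Hhs. destruct (net_select H n x x' eps2 M2 Ht2 hs Hnet2 Hhs) as [hts [Hclose Hin]].
  exists hts. split; [symmetry; apply (Forall2_length Hclose)|split; auto].
  eapply Rle_trans; [apply (excess_le_psi n B y x x' (ftilde v m0 hs)); auto|].
  rewrite (emp_l1_ext _ _ _ _ (fun z => v / INR m0 * (lsum hts (fun h => h z) - lsum hs (fun h => h z))))
    by (intros; rewrite !ftilde_lsum; ring).
  rewrite emp_l1_scal, Rabs_right by (apply Rle_ge, Rle_mult_inv_pos; lra).
  pose proof (net_sum_l1 n x x' Hn eps2 hs hts Heps2 Hclose).
  assert (0 <= v / INR m0) by (apply Rle_mult_inv_pos; lra).
  match goal with |- _ + 4 * B * (v / INR m0 * ?X) + _ <= _ =>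
    assert (4 * B * (v / INR m0 * X) <= 4 * B * (v / INR m0 * (2 * INR (length hs) * eps2)))
      by (apply Rmult_le_compat_l; [lra|]; apply Rmult_le_compat_l; auto) end.
  lra.
Qed.

Lemma dist_net_rounding hs : (forall h, In h hs -> H h) ->
  exists hts, length hts = length hs /\ (forall h, In h hts -> In h Ht2) /\
  emp_dist2 n x x' (ftilde v m0 hts) f
  <= 2 * emp_sq n x x' (fun z => ftilde v m0 hs z - f z)
     + 4 * (v / INR m0) ^ 2 * INR (length hs) ^ 2 * eps2 ^ 2.
Proof.
  intros Hhs. destruct (net_select H n x x' eps2 M2 Ht2 hs Hnet2 Hhs) as [hts [Hclose Hin]].
  exists hts. split; [symmetry; apply (Forall2_length Hclose)|split; auto].
  rewrite emp_dist2_emp_sq,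
    (emp_sq_ext _ _ _ _ (fun z => v / INR m0 * (lsum hts (fun h => h z) - lsum hs (fun h => h z))
                                  + (ftilde v m0 hs z - f z))) by (intros; rewrite !ftilde_lsum; ring).
  eapply Rle_trans; [apply (emp_sq_add_le n x x' Hn _ _ 1 Rlt_0_1)|].
  rewrite emp_sq_scal. pose proof (net_sum_sq n x x' Hn eps2 hs hts Hclose).
  replace (1 + / 1) with 2 by field.
  assert ((v / INR m0) ^ 2 * emp_sq n x x' (fun z => lsum hts (fun h => h z) - lsum hs (fun h => h z))
          <= (v / INR m0) ^ 2 * (INR (length hs) ^ 2 * (2 * eps2 ^ 2)))
    by (apply Rmult_le_compat_l; auto; apply pow2_ge_0).
  lra.
Qed.

Lemma zero_scale_comb : v = 0 -> forall z, f z = 0.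
Proof.
  intros Hv0 z. pose proof (vf_nonneg H _ vf Hvf). destruct Hvf as [_ Hglb].
  assert (Rabs (f z) <= vf).
  { apply Hglb. intros s [L0 [HL0 [Hf <-]]]. rewrite <- Hf. apply (comb_fun_abs_le d phi Lambda H); auto. }
  destruct (Req_dec (f z) 0) as [|Hz]; auto. pose proof (Rabs_pos_lt _ Hz). lra.
Qed.

Lemma zero_scale_ftilde hs z : v = 0 -> ftilde v m0 hs z = 0.
Proof. intros ->. rewrite ftilde_lsum. unfold Rdiv. ring. Qed.

Lemma zero_scale_excess hs : v = 0 -> excess n B y x x' (ftilde v m0 hs) f = 0.
Proof.
  intros Hv0.
  assert (Htr : forall g z, g z = 0 -> trunc B g z = f z).
  { intros g z Hg. unfold trunc. rewrite Hg, zero_scale_comb, Rabs_R0 by auto.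
    unfold sgn. destruct (Rlt_dec 0 0); [lra|]. destruct (Rlt_dec 0 0); [lra|]. ring. }
  unfold excess.
  rewrite (sumR_ext _ (fun i => (y i - _) ^ 2) (fun i => (y i - f (x i)) ^ 2))
    by (intros; rewrite Htr; auto; apply zero_scale_ftilde; auto).
  rewrite (sumR_ext _ (fun i => (trunc B (ftilde v m0 hs) (x' i) - trunc B f (x' i)) ^ 2) (fun _ => 0)),
    sumR_const; [ring|].
  intros. rewrite !Htr; [ring|apply zero_scale_comb|apply zero_scale_ftilde]; auto.
Qed.

Lemma zero_scale_dist hs : v = 0 -> emp_dist2 n x x' (ftilde v m0 hs) f = 0.
Proof.
  intros Hv0. rewrite emp_dist2_emp_sq, (emp_sq_ext _ _ _ _ (fun _ => 0 * 0)), emp_sq_scal by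
    (intros; rewrite zero_scale_ftilde, zero_scale_comb by auto; ring).
  ring.
Qed.

Lemma net2_nonempty : exists h0, In h0 Ht2.
Proof.
  destruct Hnet2 as [_ [_ [_ Hnet]]]. destruct HH as [_ [_ H0]].
  destruct (Hnet _ H0) as [h0 [Hh0 _]]. exists h0; auto.
Qed.

Lemma part_i_excess : exists hs, (length hs <= m0 + M1)%nat /\ (forall h, In h hs -> In h Ht2) /\
  excess n B y x x' (ftilde v m0 hs) f
  <= 2 * v ^ 2 * eps1 ^ 2 * (1 + INR M1 / INR m0) / INR m0 + v ^ 2 * INR M1 / (2 * INR m0 ^ 2)
     + 8 * B * v * (1 + INR M1 / INR m0) * eps2 + Tn n B y / INR n.
Proof.
  destruct (Req_dec v 0) as [Hv0|Hv0].
  { exists []. split; [cbn; lia|split; [intros _ []|]]. rewrite zero_scale_excess by auto.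
    rewrite Hv0. unfold Rdiv. ring_simplify. lra. }
  match goal with |- exists hs, _ /\ _ /\ _ <= ?bound =>
    destruct (ftilde_select v m0 Ht2 (m0 + M1) (fun _ => True) (fun g => excess n B y x x' g f) bound _
                (psi_slope_nonneg c))
      as [hs [Hl [_ [Hin Hle]]]]; [|exists hs; auto] end.
  intros eta Heta.
  destruct (near_optimal_comb eta) as [L' [HL' [Hw1 [_ Hpsi]]]]; [lra|auto|].
  destruct (psi_stratified d phi Lambda H Hphi HH n x x' Hn eps1 M1 Ht1 Hnet1 v m0 L'
              ltac:(lra) ltac:(lia) HL' Hw1 c f)
    as [hs [Hl [HhsH Hle]]].
  destruct (excess_net_rounding hs HhsH) as [hts [Hlen [Hin Hex]]].
  exists hts. rewrite Hlen. split; [auto|split; [auto|split; [auto|]]].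
  pose proof (Hpsi c).
  assert (Hk : INR (length hs) <= INR m0 + INR M1) by (rewrite <- plus_INR; apply le_INR; auto).
  assert (INR (length hs) * ((v / INR m0) ^ 2 * (2 * eps1 ^ 2))
          <= 2 * v ^ 2 * eps1 ^ 2 * (1 + INR M1 / INR m0) / INR m0).
  { apply Rle_trans with ((INR m0 + INR M1) * ((v / INR m0) ^ 2 * (2 * eps1 ^ 2))); [|right; field; lra].
    apply Rmult_le_compat_r; auto. pose proof (pow2_ge_0 (v / INR m0)). pose proof (pow2_ge_0 eps1). nra. }
  assert (8 * B * (v / INR m0) * INR (length hs) * eps2 <= 8 * B * v * (1 + INR M1 / INR m0) * eps2).
  { apply Rle_trans with (8 * B * (v / INR m0) * (INR m0 + INR M1) * eps2); [|right; field; lra].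
    apply Rmult_le_compat_r; auto. apply Rmult_le_compat_l; auto.
    assert (0 <= v / INR m0) by (apply Rle_mult_inv_pos; lra). nra. }
  lra.
Qed.

Lemma part_ii_excess : exists hs, length hs = m0 /\ (forall h, In h hs -> In h Ht2) /\
  excess n B y x x' (ftilde v m0 hs) f <= 2 * v * vf / INR m0 + 8 * B * v * eps2 + Tn n B y / INR n.
Proof.
  destruct (Req_dec v 0) as [Hv0|Hv0].
  { destruct net2_nonempty as [h0 Hh0]. exists (repeat h0 m0).
    split; [apply repeat_length|split; [intros h Hh; apply repeat_spec in Hh; subst; auto|]].
    rewrite zero_scale_excess, Hv0 by auto. unfold Rdiv. ring_simplify. lra. }
  assert (Hslope : 0 <= psi_slope c + 2 * v / INR m0)
    by (pose proof (psi_slope_nonneg c); assert (0 <= 2 * v / INR m0) by (apply Rle_mult_inv_pos; lra); lra).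
  match goal with |- exists hs, _ /\ _ /\ _ <= ?bound =>
    destruct (ftilde_select v m0 Ht2 m0 (fun k => k = m0) (fun g => excess n B y x x' g f) bound _ Hslope)
      as [hs [_ [Hl [Hin Hle]]]]; [|exists hs; auto] end.
  intros eta Heta.
  destruct (near_optimal_comb eta) as [L' [HL' [Hw1 [Hw2 Hpsi]]]]; [lra|auto|].
  destruct (psi_maurey d phi Lambda H Hphi HH v m0 L' ltac:(lra) ltac:(lia) HL' Hw1 n x x' c f Hn)
    as [hs [Hl [HhsH Hle]]].
  destruct (excess_net_rounding hs HhsH) as [hts [Hlen [Hin Hex]]].
  exists hts. rewrite Hlen, Hl. split; [lia|split; [auto|split; [auto|]]].
  pose proof (Hpsi c). rewrite Hl in Hex.
  replace (8 * B * (v / INR m0) * INR m0 * eps2) with (8 * B * v * eps2) in Hex by (field; lra).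
  assert (2 * v * comb_weight L' / INR m0 <= 2 * v * (vf + eta) / INR m0).
  { apply Rmult_le_compat_r; [left; apply Rinv_0_lt_compat; lra|]. apply Rmult_le_compat_l; lra. }
  replace (2 * v * (vf + eta) / INR m0) with (2 * v * vf / INR m0 + 2 * v / INR m0 * eta) in * by (field; lra).
  lra.
Qed.

Lemma part_ii_dist : exists hs, length hs = m0 /\ (forall h, In h hs -> In h Ht2) /\
  emp_dist2 n x x' (ftilde v m0 hs) f <= 4 * v * vf / INR m0 + 4 * v ^ 2 * eps2 ^ 2.
Proof.
  destruct (Req_dec v 0) as [Hv0|Hv0].
  { destruct net2_nonempty as [h0 Hh0]. exists (repeat h0 m0).
    split; [apply repeat_length|split; [intros h Hh; apply repeat_spec in Hh; subst; auto|]].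
    rewrite zero_scale_dist, Hv0 by auto. unfold Rdiv. ring_simplify. lra. }
  assert (Hslope : 0 <= 2 * psi_slope (fun _ => 0) + 4 * v / INR m0)
    by (pose proof (psi_slope_nonneg (fun _ => 0));
        assert (0 <= 4 * v / INR m0) by (apply Rle_mult_inv_pos; lra); lra).
  match goal with |- exists hs, _ /\ _ /\ _ <= ?bound =>
    destruct (ftilde_select v m0 Ht2 m0 (fun k => k = m0) (fun g => emp_dist2 n x x' g f) bound _ Hslope)
      as [hs [_ [Hl [Hin Hle]]]]; [|exists hs; auto] end.
  intros eta Heta.
  destruct (near_optimal_comb eta) as [L' [HL' [Hw1 [Hw2 Hpsi]]]]; [lra|auto|].
  destruct (psi_maurey d phi Lambda H Hphi HH v m0 L' ltac:(lra) ltac:(lia) HL' Hw1 n x x' (fun _ => 0) f Hn)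
    as [hs [Hl [HhsH Hle]]].
  destruct (dist_net_rounding hs HhsH) as [hts [Hlen [Hin Hdist]]].
  exists hts. rewrite Hlen, Hl. split; [lia|split; [auto|split; [auto|]]].
  pose proof (Hpsi (fun _ => 0)). rewrite !psi_zero in *. rewrite Hl in Hdist.
  replace (4 * (v / INR m0) ^ 2 * INR m0 ^ 2 * eps2 ^ 2) with (4 * v ^ 2 * eps2 ^ 2) in Hdist by (field; lra).
  assert (2 * v * comb_weight L' / INR m0 <= 2 * v * (vf + eta) / INR m0).
  { apply Rmult_le_compat_r; [left; apply Rinv_0_lt_compat; lra|]. apply Rmult_le_compat_l; lra. }
  replace (2 * v * (vf + eta) / INR m0) with (2 * v * vf / INR m0 + 2 * v / INR m0 * eta) in * by (field; lra).
  lra.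
Qed.

Lemma count_i : exists Lc : list (vec -> R), INR (length Lc) <= C (M2 + M1 + m0) (M1 + m0) /\
  forall hs, (length hs <= m0 + M1)%nat -> (forall h, In h hs -> In h Ht2) -> In (ftilde v m0 hs) Lc.
Proof.
  destruct (ftilde_count v m0 Ht2 (m0 + M1)) as [Lc [Hl Hin]]. exists Lc. split; auto.
  destruct Hnet2 as [_ [HM2 _]]. rewrite HM2 in Hl.
  replace (M2 + M1 + m0)%nat with (M2 + (m0 + M1))%nat by ring. rewrite (Nat.add_comm M1). exact Hl.
Qed.

Lemma count_ii : exists Lc : list (vec -> R), INR (length Lc) <= C (M2 + m0) m0 /\
  forall hs, length hs = m0 -> (forall h, In h hs -> In h Ht2) -> In (ftilde v m0 hs) Lc.
Proof.
  destruct (ftilde_count v m0 Ht2 m0) as [Lc [Hl Hin]]. exists Lc.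
  destruct Hnet2 as [_ [HM2 _]]. rewrite HM2 in Hl. split; auto.
  intros hs Hlen Hh. apply Hin; auto. rewrite Hlen. apply le_n.
Qed.

End Lemma5.

Theorem lemma5
  (d : nat) (phi : R -> R) (Lambda : R) (H : (vec -> R) -> Prop)
  (Hphi : phi_ok phi) (HH : H_ok d phi Lambda H)
  (n : nat) (Hn : (0 < n)%nat) (y : nat -> R) (x x' : nat -> vec)
  (B : R) (HB : 0 < B)
  (eps1 eps2 : R) (Heps1 : 0 <= eps1) (Heps2 : 0 <= eps2)
  (M1 M2 : nat) (Ht1 Ht2 : list (vec -> R))
  (Hnet1 : emp_net H n x x' eps1 M1 Ht1)
  (Hnet2 : emp_net H n x x' eps2 M2 Ht2)
  (L : list (R * (vec -> R))) (HL : comb_ok H L)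
  (vf : R) (Hvf : is_glb (vf_set H (comb_fun L)) vf)
  (m0 : nat) (Hm0 : (1 <= m0)%nat) (v : R) (Hv : vf <= v) :
  let f := comb_fun L in
  (* (i) *)
  ((exists hs : list (vec -> R),
      (length hs <= m0 + M1)%nat /\ (forall h, In h hs -> In h Ht2) /\
      excess n B y x x' (ftilde v m0 hs) f
      <= 2 * v ^ 2 * eps1 ^ 2 * (1 + INR M1 / INR m0) / INR m0
         + v ^ 2 * INR M1 / (2 * INR m0 ^ 2)
         + 8 * B * v * (1 + INR M1 / INR m0) * eps2
         + Tn n B y / INR n)
   /\
   (exists Lc : list (vec -> R),
      INR (length Lc) <= C (M2 + M1 + m0) (M1 + m0) /\
      forall hs : list (vec -> R),
        (length hs <= m0 + M1)%nat -> (forall h, In h hs -> In h Ht2) ->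
        In (ftilde v m0 hs) Lc))
  /\
  (* (ii) *)
  ((exists hs : list (vec -> R),
      length hs = m0 /\ (forall h, In h hs -> In h Ht2) /\
      excess n B y x x' (ftilde v m0 hs) f
      <= 2 * v * vf / INR m0 + 8 * B * v * eps2 + Tn n B y / INR n)
   /\
   (exists hs : list (vec -> R),
      length hs = m0 /\ (forall h, In h hs -> In h Ht2) /\
      emp_dist2 n x x' (ftilde v m0 hs) f
      <= 4 * v * vf / INR m0 + 4 * v ^ 2 * eps2 ^ 2)
   /\
   (exists Lc : list (vec -> R),
      INR (length Lc) <= C (M2 + m0) m0 /\
      forall hs : list (vec -> R),
        length hs = m0 -> (forall h, In h hs -> In h Ht2) ->
        In (ftilde v m0 hs) Lc)).
Proof.
  intros f. split; [split|split; [|split]].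
  - eapply part_i_excess; eauto.
  - eapply count_i; eauto.
  - eapply part_ii_excess; eauto.
  - eapply part_ii_dist; eauto.
  - eapply count_ii; eauto.
Qed.
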